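(* Let $0<p\le1$. If $(\mathcal{H},\|\cdot\|_{\mathcal{H}})$ is a $p$-normed (resp. $p$-Banach) multilinear hyper-ideal, then $(\mathcal{P}^{\mathcal{H}},\|\cdot\|_{\mathcal{P}^{\mathcal{H}}})$ is a $p$-normed (resp. $p$-Banach) polynomial $(C_m)_{m=1}^\infty$-hyper-ideal with $C_m=\frac{m^m}{m!}$; in particular, for $t\in\mathcal{L}(F;H)$, $P\in\mathcal{P}^{\mathcal{H}}(^nE;F)$ and $R\in\mathcal{P}(^mG;E)$ one has $t\circ P\circ R\in\mathcal{P}^{\mathcal{H}}(^{mn}G;H)$ and $\|t\circ P\circ R\|_{\mathcal{P}^{\mathcal{H}}}\le\left(\frac{m^m}{m!}\right)^n\|t\|\,\|P\|_{\mathcal{P}^{\mathcal{H}}}\|R\|^n$.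
   Context: All spaces are Banach spaces over $\mathbb{K}=\mathbb{R}$ or $\mathbb{C}$. A $p$-normed multilinear hyper-ideal is a class $\mathcal{H}$ of continuous multilinear maps with a function $\|\cdot\|_{\mathcal{H}}$ such that each component $\mathcal{H}(E_1,\dots,E_n;F)$ is a linear subspace of $\mathcal{L}(E_1,\dots,E_n;F)$ containing the finite-type maps on which $\|\cdot\|_{\mathcal{H}}$ is a $p$-norm, $\|I_n\|_{\mathcal{H}}=1$ for $I_n(\lambda_1,\dots,\lambda_n)=\lambda_1\cdots\lambda_n$, and (hyper-ideal property) whenever $A\in\mathcal{H}(E_1,\dots,E_n;F)$, $B_j\in\mathcal{L}(G_{j,1},\dots,G_{j,m_j};E_j)$ for $j=1,\dots,n$ and $t\in\mathcal{L}(F;H)$, then $t\circ A\circ(B_1,\dots,B_n)\in\mathcal{H}$ with $\|t\circ A\circ(B_1,\dots,B_n)\|_{\mathcal{H}}\le\|t\|\|A\|_{\mathcal{H}}\|B_1\|\cdots\|B_n\|$; $p$-Banach means the components are complete. For $A\in\mathcal{L}(^nE;F)$, $\widehat A(x)=A(x,\dots,x)$. $\mathcal{P}^{\mathcal{H}}(^nE;F)=\{P\in\mathcal{P}(^nE;F):P=\widehat A\text{ for some }A\in\mathcal{H}(^nE;F)\}$ and $\|P\|_{\mathcal{P}^{\mathcal{H}}}=\inf\{\|A\|_{\mathcal{H}}:A\in\mathcal{H},\ \widehat A=P\}$. A $p$-normed polynomial $(C_m)_{m=1}^\infty$-hyper-ideal ($C_m\ge1$, $C_1=1$) is a class $\mathcal{Q}$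 of homogeneous polynomials with a function $\|\cdot\|_{\mathcal{Q}}$ such that each $\mathcal{Q}(^nE;F)$ is a subspace of $\mathcal{P}(^nE;F)$ containing the finite-type polynomials (linear combinations of $x\mapsto\varphi(x)^ny$), $\|\cdot\|_{\mathcal{Q}}$ is a $p$-norm on it, $\|\lambda\mapsto\lambda^n\|_{\mathcal{Q}}=1$, and for $P\in\mathcal{Q}(^nE;F)$, $Q\in\mathcal{P}(^mG;E)$, $t\in\mathcal{L}(F;H)$: $t\circ P\circ Q\in\mathcal{Q}(^{mn}G;H)$ and $\|t\circ P\circ Q\|_{\mathcal{Q}}\le(C_m)^n\|t\|\|P\|_{\mathcal{Q}}\|Q\|^n$. When all $C_m=1$ it is called a polynomial hyper-ideal; $p$-Banach means complete components. *)

From Stdlib Require Import Reals Factorial Lra Lia Classical ClassicalEpsilon FunctionalExtensionality.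
Open Scope R_scope.


Inductive fkind := KReal | KComplex.

Definition Kt (k : fkind) : Type :=
  match k with KReal => R | KComplex => (R * R)%type end.

Definition Kzero (k : fkind) : Kt k :=
  match k return Kt k with KReal => 0 | KComplex => (0, 0) end.
Definition Kone (k : fkind) : Kt k :=
  match k return Kt k with KReal => 1 | KComplex => (1, 0) end.
Definition Kadd (k : fkind) : Kt k -> Kt k -> Kt k :=
  match k return Kt k -> Kt k -> Kt k with
  | KReal => Rplus
  | KComplex => fun x y => (fst x + fst y, snd x + snd y) end.
Definition Kmul (k : fkind) : Kt k -> Kt k -> Kt k :=
  match k return Kt k -> Kt k -> Kt k with
  | KReal => Rmult
  | KComplex => fun x y => (fst x * fst y - snd x * snd y,
                           fst x * snd y + snd x * fst y) end.
Definition Kopp (k : fkind) : Kt k -> Kt k :=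
  match k return Kt k -> Kt k with
  | KReal => Ropp
  | KComplex => fun x => (- fst x, - snd x) end.
Definition Kabs (k : fkind) : Kt k -> R :=
  match k return Kt k -> R with
  | KReal => Rabs
  | KComplex => fun x => sqrt (fst x * fst x + snd x * snd x) end.
Arguments Kadd {k}.
Arguments Kmul {k}.
Arguments Kopp {k}.
Arguments Kabs {k}.
Fixpoint Kpow {k : fkind} (x : Kt k) (n : nat) : Kt k :=
  match n with O => Kone k | S n' => Kmul (Kpow x n') x end.

Definition Idx (n : nat) : Type := {i : nat | (i < n)%nat}.

Definition widen {n : nat} (i : Idx n) : Idx (S n) :=
  exist _ (proj1_sig i) (le_S _ _ (proj2_sig i)).
Definition lastI (n : nat) : Idx (S n) := exist _ n (le_n (S n)).

Fixpoint iprod {T : Type} (one : T) (mul : T -> T -> T) {n : nat}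
  : (Idx n -> T) -> T :=
  match n return (Idx n -> T) -> T with
  | O => fun _ => one
  | S n' => fun f => mul (iprod one mul (fun i => f (widen i))) (f (lastI n'))
  end.

Fixpoint psum (m : nat -> nat) (j : nat) : nat :=
  match j with O => O | S j' => (psum m j' + m j')%nat end.

Lemma psum_mono (m : nat -> nat) {a b : nat} : (a <= b)%nat -> (psum m a <= psum m b)%nat.
Proof. induction 1; simpl; lia. Qed.

Lemma flat_lt (m : nat -> nat) (n : nat) (j : Idx n) (l : Idx (m (proj1_sig j))) :
  (psum m (proj1_sig j) + proj1_sig l < psum m n)%nat.
Proof.
  destruct j as [j hj]; destruct l as [l hl]; simpl in *.
  pose proof (psum_mono m (a:=S j) (b:=n) hj). simpl in H. lia.
Qed.

(* position of the l-th argument of the j-th block inside the concatenated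
   list of arguments (G_{1,1},...,G_{1,m_1},...,G_{n,1},...,G_{n,m_n}) *)
Definition flat (m : nat -> nat) (n : nat) (j : Idx n) (l : Idx (m (proj1_sig j)))
  : Idx (psum m n) :=
  exist _ (psum m (proj1_sig j) + proj1_sig l)%nat (flat_lt m n j l).

(* Suprema / infima of real sets (0 by convention if not defined)      *)
Definition Rsup (E : R -> Prop) : R :=
  match excluded_middle_informative (bound E /\ exists x, E x) with
  | left h => proj1_sig (completeness E (proj1 h) (proj2 h))
  | right _ => 0
  end.
Definition Rinf (E : R -> Prop) : R := - Rsup (fun x => E (- x)).

Definition rpow (x p : R) : R := if Rle_dec x 0 then 0 else Rpower x p.

Record Space (k : fkind) := mkSpace {
  car :> Type;
  vzero : car;
  vadd : car -> car -> car;
  vopp : car -> car;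
  vscal : Kt k -> car -> car;
  vnorm : car -> R }.
Arguments car {k}.
Arguments vzero {k} s.
Arguments vadd {k s}.
Arguments vopp {k s}.
Arguments vscal {k s}.
Arguments vnorm {k s}.

Definition vsub {k} {E : Space k} (x y : E) : E := vadd x (vopp y).

Definition Banach {k} (E : Space k) : Prop :=
  (forall x y z : E, vadd x (vadd y z) = vadd (vadd x y) z) /\
  (forall x y : E, vadd x y = vadd y x) /\
  (forall x : E, vadd x (vzero E) = x) /\
  (forall x : E, vadd x (vopp x) = vzero E) /\
  (forall (a b : Kt k) (x : E), vscal a (vscal b x) = vscal (Kmul a b) x) /\
  (forall x : E, vscal (Kone k) x = x) /\
  (forall (a : Kt k) (x y : E), vscal a (vadd x y) = vadd (vscal a x) (vscal a y)) /\
  (forall (a b : Kt k) (x : E), vscal (Kadd a b) x = vadd (vscal a x) (vscal b x)) /\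
  (forall x : E, 0 <= vnorm x) /\
  (forall x : E, vnorm x = 0 -> x = vzero E) /\
  (forall (a : Kt k) (x : E), vnorm (vscal a x) = Kabs a * vnorm x) /\
  (forall x y : E, vnorm (vadd x y) <= vnorm x + vnorm y) /\
  (forall u : nat -> E,
     (forall eps, 0 < eps -> exists N, forall i j, (N <= i)%nat -> (N <= j)%nat ->
        vnorm (vsub (u i) (u j)) < eps) ->
     exists x : E, forall eps, 0 < eps -> exists N, forall i, (N <= i)%nat ->
        vnorm (vsub (u i) x) < eps).

Definition Kspace (k : fkind) : Space k :=
  @mkSpace k (Kt k) (Kzero k) (@Kadd k) (@Kopp k) (@Kmul k) (@Kabs k).

Definition is_linear {k} {E F : Space k} (t : E -> F) : Prop :=
  forall (x y : E) (a : Kt k), t (vadd x (vscal a y)) = vadd (t x) (vscal a (t y)).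
Definition is_cont {k} {E F : Space k} (t : E -> F) : Prop :=
  forall (x : E) eps, 0 < eps -> exists d, 0 < d /\
    forall y : E, vnorm (vsub y x) < d -> vnorm (vsub (t y) (t x)) < eps.
Definition clin {k} {E F : Space k} (t : E -> F) : Prop := is_linear t /\ is_cont t.
Definition opnorm {k} {E F : Space k} (t : E -> F) : R :=
  Rsup (fun r => exists x : E, vnorm x <= 1 /\ r = vnorm (t x)).

Definition MLmap {k} {n : nat} (Es : Idx n -> Space k) (F : Space k) : Type :=
  (forall i : Idx n, car (Es i)) -> car F.

Definition is_multilinear {k n} {Es : Idx n -> Space k} {F : Space k}
  (A : MLmap Es F) : Prop :=
  forall (i : Idx n) (x y z : forall j, car (Es j)) (a : Kt k),
    (forall j, j <> i -> x j = z j /\ y j = z j) ->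
    z i = vadd (x i) (vscal a (y i)) ->
    A z = vadd (A x) (vscal a (A y)).

Definition is_cont_ml {k n} {Es : Idx n -> Space k} {F : Space k}
  (A : MLmap Es F) : Prop :=
  forall (x : forall j, car (Es j)) eps, 0 < eps -> exists d, 0 < d /\
    forall y : forall j, car (Es j),
      (forall j, vnorm (vsub (y j) (x j)) < d) -> vnorm (vsub (A y) (A x)) < eps.

Definition cml {k n} {Es : Idx n -> Space k} {F : Space k} (A : MLmap Es F) : Prop :=
  is_multilinear A /\ is_cont_ml A.

Definition mlnorm {k n} {Es : Idx n -> Space k} {F : Space k} (A : MLmap Es F) : R :=
  Rsup (fun r => exists x : forall j, car (Es j),
          (forall j, vnorm (x j) <= 1) /\ r = vnorm (A x)).

Fixpoint vsumn {k} {F : Space k} (m : nat) (f : nat -> F) : F :=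
  match m with O => vzero F | S m' => vadd (vsumn m' f) (f m') end.

Definition finite_type_ml {k n} {Es : Idx n -> Space k} {F : Space k}
  (A : MLmap Es F) : Prop :=
  exists (m : nat) (phi : nat -> forall i : Idx n, car (Es i) -> Kt k) (y : nat -> car F),
    (forall l i, @clin k (Es i) (Kspace k) (phi l i)) /\
    forall x, A x = vsumn m (fun l => vscal (iprod (Kone k) (@Kmul k) (fun i => phi l i (x i))) (y l)).

Definition In (k : fkind) (n : nat) : MLmap (fun _ : Idx n => Kspace k) (Kspace k) :=
  fun x => iprod (Kone k) (@Kmul k) x.

Definition ml_zero {k n} {Es : Idx n -> Space k} {F : Space k} : MLmap Es F :=
  fun _ => vzero F.
Definition ml_add {k n} {Es : Idx n -> Space k} {F : Space k} (A B : MLmap Es F) : MLmap Es F :=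
  fun x => vadd (A x) (B x).
Definition ml_scal {k n} {Es : Idx n -> Space k} {F : Space k} (a : Kt k) (A : MLmap Es F)
  : MLmap Es F := fun x => vscal a (A x).

Definition is_poly {k} (n : nat) {E F : Space k} (P : E -> F) : Prop :=
  exists A : MLmap (fun _ : Idx n => E) F, cml A /\ forall x, P x = A (fun _ => x).

Definition pnorm {k} {E F : Space k} (P : E -> F) : R :=
  Rsup (fun r => exists x : E, vnorm x <= 1 /\ r = vnorm (P x)).

Definition finite_type_poly {k} (n : nat) {E F : Space k} (P : E -> F) : Prop :=
  exists (m : nat) (phi : nat -> E -> Kt k) (y : nat -> car F),
    (forall l, @clin k E (Kspace k) (phi l)) /\
    forall x, P x = vsumn m (fun l => vscal (Kpow (phi l x) n) (y l)).

Definition fn_zero {k} {E F : Space k} : E -> F := fun _ => vzero F.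
Definition fn_add {k} {E F : Space k} (P Q : E -> F) : E -> F := fun x => vadd (P x) (Q x).
Definition fn_scal {k} {E F : Space k} (a : Kt k) (P : E -> F) : E -> F :=
  fun x => vscal a (P x).

Definition pnormed_subspace {k : fkind} {X : Type} (zero : X) (add : X -> X -> X)
  (scal : Kt k -> X -> X) (S : X -> Prop) (N : X -> R) (p : R) : Prop :=
  S zero /\
  (forall A B, S A -> S B -> S (add A B)) /\
  (forall a A, S A -> S (scal a A)) /\
  (forall A, S A -> 0 <= N A) /\
  (forall A, S A -> (N A = 0 <-> A = zero)) /\
  (forall a A, S A -> N (scal a A) = Kabs a * N A) /\
  (forall A B, S A -> S B -> rpow (N (add A B)) p <= rpow (N A) p + rpow (N B) p).

Definition complete_subspace {k : fkind} {X : Type} (add : X -> X -> X)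
  (scal : Kt k -> X -> X) (S : X -> Prop) (N : X -> R) : Prop :=
  let sub := fun A B => add A (scal (Kopp (Kone k)) B) in
  forall u : nat -> X, (forall i, S (u i)) ->
    (forall eps, 0 < eps -> exists M, forall i j, (M <= i)%nat -> (M <= j)%nat ->
        N (sub (u i) (u j)) < eps) ->
    exists A, S A /\ forall eps, 0 < eps -> exists M, forall i, (M <= i)%nat ->
        N (sub (u i) A) < eps.

Definition MLclass (k : fkind) : Type :=
  forall (n : nat) (Es : Idx n -> Space k) (F : Space k), MLmap Es F -> Prop.
Definition MLclassNorm (k : fkind) : Type :=
  forall (n : nat) (Es : Idx n -> Space k) (F : Space k), MLmap Es F -> R.

Definition is_pnormed_ml_hyper_ideal (k : fkind) (p : R)
  (HM : MLclass k) (HN : MLclassNorm k) : Prop :=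
  (forall n (Es : Idx n -> Space k) (F : Space k),
     (1 <= n)%nat -> (forall i, Banach (Es i)) -> Banach F ->
     (forall A, HM n Es F A -> cml A) /\
     (forall A, finite_type_ml A -> HM n Es F A) /\
     pnormed_subspace ml_zero ml_add ml_scal (HM n Es F) (HN n Es F) p) /\
  (forall n, (1 <= n)%nat -> HN n (fun _ => Kspace k) (Kspace k) (In k n) = 1) /\
  (forall n (m : nat -> nat) (Es : Idx n -> Space k) (F H : Space k)
     (Gs : Idx (psum m n) -> Space k)
     (A : MLmap Es F)
     (B : forall j : Idx n, MLmap (fun l : Idx (m (proj1_sig j)) => Gs (flat m n j l)) (Es j))
     (t : F -> H),
     (1 <= n)%nat -> (forall j, (j < n)%nat -> (1 <= m j)%nat) ->
     (forall i, Banach (Es i)) -> Banach F -> Banach H -> (forall i, Banach (Gs i)) ->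
     HM n Es F A -> (forall j, cml (B j)) -> clin t ->
     let C : MLmap Gs H := fun y => t (A (fun j => B j (fun l => y (flat m n j l)))) in
     HM (psum m n) Gs H C /\
     HN (psum m n) Gs H C <=
       opnorm t * HN n Es F A * iprod 1 Rmult (fun j => mlnorm (B j))).

Definition is_pBanach_ml_hyper_ideal (k : fkind) (p : R)
  (HM : MLclass k) (HN : MLclassNorm k) : Prop :=
  is_pnormed_ml_hyper_ideal k p HM HN /\
  (forall n (Es : Idx n -> Space k) (F : Space k),
     (1 <= n)%nat -> (forall i, Banach (Es i)) -> Banach F ->
     complete_subspace ml_add ml_scal (HM n Es F) (HN n Es F)).

Definition Pclass (k : fkind) : Type :=
  forall (n : nat) (E F : Space k), (E -> F) -> Prop.
Definition PclassNorm (k : fkind) : Type :=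
  forall (n : nat) (E F : Space k), (E -> F) -> R.

Definition is_pnormed_poly_hyper_ideal (k : fkind) (p : R) (Cm : nat -> R)
  (QM : Pclass k) (QN : PclassNorm k) : Prop :=
  (forall n (E F : Space k), (1 <= n)%nat -> Banach E -> Banach F ->
     (forall P, QM n E F P -> is_poly n P) /\
     (forall P, finite_type_poly n P -> QM n E F P) /\
     pnormed_subspace fn_zero fn_add fn_scal (QM n E F) (QN n E F) p) /\
  (forall n, (1 <= n)%nat ->
     QN n (Kspace k) (Kspace k) (fun l : Kt k => Kpow l n) = 1) /\
  (forall n m (E F G H : Space k) (P : E -> F) (Q : G -> E) (t : F -> H),
     (1 <= n)%nat -> (1 <= m)%nat ->
     Banach E -> Banach F -> Banach G -> Banach H ->
     QM n E F P -> is_poly m Q -> clin t ->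
     QM (m * n)%nat G H (fun x => t (P (Q x))) /\
     QN (m * n)%nat G H (fun x => t (P (Q x))) <=
       (Cm m) ^ n * opnorm t * QN n E F P * (pnorm Q) ^ n).

Definition is_pBanach_poly_hyper_ideal (k : fkind) (p : R) (Cm : nat -> R)
  (QM : Pclass k) (QN : PclassNorm k) : Prop :=
  is_pnormed_poly_hyper_ideal k p Cm QM QN /\
  (forall n (E F : Space k), (1 <= n)%nat -> Banach E -> Banach F ->
     complete_subspace fn_add fn_scal (QM n E F) (QN n E F)).

Definition PH {k} (HM : MLclass k) : Pclass k :=
  fun n E F P => exists A : MLmap (fun _ : Idx n => E) F,
    HM n (fun _ => E) F A /\ forall x, P x = A (fun _ => x).

Definition PHnorm {k} (HM : MLclass k) (HN : MLclassNorm k) : PclassNorm k :=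
  fun n E F P => Rinf (fun r => exists A : MLmap (fun _ : Idx n => E) F,
    HM n (fun _ => E) F A /\ (forall x, P x = A (fun _ => x)) /\
    r = HN n (fun _ => E) F A).

Definition Cmm (m : nat) : R := (INR m) ^ m / INR (fact m).

(* An n-homogeneous polynomial in P^H is the diagonal of some A in H, and its
   quasi-norm is the infimum of ||A||_H over such A; the p-norm axioms and
   completeness pass from H to P^H through this infimum (for completeness, a fast
   Cauchy subsequence is lifted to a telescoping series of representatives in H).
   Definiteness uses the hyper-ideal property: composing A with the lines
   lambda |-> lambda x bounds ||P(x)|| by a multiple of ||A||_H.
   For t o P o R with R = B^, the polarization formula replaces B by a symmetric
   m-linear S with the same diagonal and ||S|| <= (m^m/m!) ||R||; then t o P o R is
   the diagonal of t o A o (S,...,S), which lies in H with norm at most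
   ||t|| ||A||_H ||S||^n. *)

From Stdlib Require Import Reals Lra Lia Arith FunctionalExtensionality Classical ClassicalEpsilon.
From Stdlib Require List.
Open Scope R_scope.

(** * Scalars and normed spaces *)

Definition Kr (k : fkind) (r : R) : Kt k :=
  match k return Kt k with KReal => r | KComplex => (r, 0) end.

Definition Kinv (k : fkind) : Kt k -> Kt k :=
  match k return Kt k -> Kt k with
  | KReal => Rinv
  | KComplex => fun x => (fst x / (fst x * fst x + snd x * snd x),
                         - snd x / (fst x * fst x + snd x * snd x)) end.

Ltac destruct_scalars := repeat match goal with
  | [ a : Kt KComplex |- _ ] => destruct a
  | [ a : (R * R)%type |- _ ] => destruct a
  end.

Lemma Rsqr_sum_ge0 x y : 0 <= x * x + y * y.
Proof. nra. Qed.

Lemma complex_abs_triang a1 a2 b1 b2 :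
  sqrt ((a1 + b1) * (a1 + b1) + (a2 + b2) * (a2 + b2))
  <= sqrt (a1 * a1 + a2 * a2) + sqrt (b1 * b1 + b2 * b2).
Proof.
  pose proof (sqrt_pos (a1 * a1 + a2 * a2)); pose proof (sqrt_pos (b1 * b1 + b2 * b2)).
  pose proof (sqrt_sqrt _ (Rsqr_sum_ge0 a1 a2)); pose proof (sqrt_sqrt _ (Rsqr_sum_ge0 b1 b2)).
  assert (cauchy_schwarz :
    a1 * b1 + a2 * b2 <= sqrt (a1 * a1 + a2 * a2) * sqrt (b1 * b1 + b2 * b2)).
  { rewrite <- sqrt_mult by apply Rsqr_sum_ge0.
    pose proof (sqrt_pos ((a1 * a1 + a2 * a2) * (b1 * b1 + b2 * b2))).
    destruct (Rle_dec (a1 * b1 + a2 * b2) 0); [lra|].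
    apply Rsqr_incr_0_var; [|lra].
    rewrite Rsqr_sqrt by (apply Rmult_le_pos; apply Rsqr_sum_ge0).
    pose proof (Rle_0_sqr (a1 * b2 - a2 * b1)). unfold Rsqr in *; nra. }
  apply Rsqr_incr_0_var; [|lra].
  rewrite Rsqr_sqrt by apply Rsqr_sum_ge0. unfold Rsqr. nra.
Qed.

Section Scalars.
Variable k : fkind.

Ltac scalar_identity :=
  destruct k; simpl in *; destruct_scalars; simpl; try ring; f_equal; ring.

Lemma Kadd_comm (a b : Kt k) : Kadd a b = Kadd b a.
Proof. scalar_identity. Qed.
Lemma Kadd_assoc (a b c : Kt k) : Kadd a (Kadd b c) = Kadd (Kadd a b) c.
Proof. scalar_identity. Qed.
Lemma Kadd_0_l (a : Kt k) : Kadd (Kzero k) a = a.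
Proof. scalar_identity. Qed.
Lemma Kadd_opp (a : Kt k) : Kadd a (Kopp a) = Kzero k.
Proof. scalar_identity. Qed.
Lemma Kmul_comm (a b : Kt k) : Kmul a b = Kmul b a.
Proof. scalar_identity. Qed.
Lemma Kmul_assoc (a b c : Kt k) : Kmul a (Kmul b c) = Kmul (Kmul a b) c.
Proof. scalar_identity. Qed.
Lemma Kmul_1_l (a : Kt k) : Kmul (Kone k) a = a.
Proof. scalar_identity. Qed.
Lemma Kmul_add_r (a b c : Kt k) : Kmul a (Kadd b c) = Kadd (Kmul a b) (Kmul a c).
Proof. scalar_identity. Qed.
Lemma Kmul_opp_1 (a : Kt k) : Kmul (Kopp (Kone k)) a = Kopp a.
Proof. scalar_identity. Qed.
Lemma Kopp_opp (a : Kt k) : Kopp (Kopp a) = a.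
Proof. scalar_identity. Qed.

Lemma Kr_add a b : Kr k (a + b) = Kadd (Kr k a) (Kr k b).
Proof. scalar_identity. Qed.
Lemma Kr_mul a b : Kr k (a * b) = Kmul (Kr k a) (Kr k b).
Proof. scalar_identity. Qed.
Lemma Kr_opp a : Kr k (- a) = Kopp (Kr k a).
Proof. scalar_identity. Qed.
Lemma Kr_1 : Kr k 1 = Kone k.
Proof. destruct k; reflexivity. Qed.
Lemma Kr_0 : Kr k 0 = Kzero k.
Proof. destruct k; reflexivity. Qed.
Lemma Kr_pow r n : Kr k (r ^ n) = Kpow (Kr k r) n.
Proof. induction n; simpl. apply Kr_1. rewrite Kr_mul, IHn. apply Kmul_comm. Qed.

Lemma Kpow_1 n : Kpow (Kone k) n = Kone k.
Proof. induction n; simpl; auto. rewrite IHn. apply Kmul_1_l. Qed.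

Lemma Kabs_Kr r : Kabs (Kr k r) = Rabs r.
Proof.
  destruct k; simpl; auto.
  replace (r * r + 0 * 0) with (Rsqr r) by (unfold Rsqr; ring). apply sqrt_Rsqr_abs.
Qed.

Lemma Kabs_ge0 (a : Kt k) : 0 <= Kabs a.
Proof. destruct k; simpl in *; destruct_scalars. apply Rabs_pos. apply sqrt_pos. Qed.

Lemma Kabs_mul (a b : Kt k) : Kabs (Kmul a b) = Kabs a * Kabs b.
Proof.
  destruct k; simpl in *; destruct_scalars; simpl. apply Rabs_mult.
  rewrite <- sqrt_mult by apply Rsqr_sum_ge0. f_equal; ring.
Qed.

Lemma Kabs_eq0 (a : Kt k) : Kabs a = 0 -> a = Kzero k.
Proof.
  destruct k; simpl in *; destruct_scalars; simpl; intro H.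
  - destruct (Req_dec a 0); auto. exfalso; apply Rabs_no_R0 in H0; auto.
  - apply sqrt_eq_0 in H; [|nra]. f_equal; nra.
Qed.

Lemma Kabs_0 : Kabs (Kzero k) = 0.
Proof. rewrite <- Kr_0, Kabs_Kr. apply Rabs_R0. Qed.
Lemma Kabs_1 : Kabs (Kone k) = 1.
Proof. rewrite <- Kr_1, Kabs_Kr. apply Rabs_R1. Qed.

Lemma Kabs_opp (a : Kt k) : Kabs (Kopp a) = Kabs a.
Proof.
  rewrite <- Kmul_opp_1, Kabs_mul, <- Kr_1, <- Kr_opp, Kabs_Kr, Rabs_Ropp, Rabs_R1. ring.
Qed.

Lemma Kabs_triang (a b : Kt k) : Kabs (Kadd a b) <= Kabs a + Kabs b.
Proof.
  destruct k; simpl in *; destruct_scalars; simpl. apply Rabs_triang. apply complex_abs_triang.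
Qed.

Lemma Kmul_inv_r (a : Kt k) : a <> Kzero k -> Kmul a (Kinv k a) = Kone k.
Proof.
  destruct k; simpl in *; destruct_scalars; simpl; intro H. field; auto.
  assert (r * r + r0 * r0 <> 0) by (intro; apply H; f_equal; nra).
  f_equal; field; auto.
Qed.

Lemma Kabs_inv (a : Kt k) : a <> Kzero k -> Kabs (Kinv k a) * Kabs a = 1.
Proof. intro H. rewrite <- Kabs_mul, Kmul_comm, Kmul_inv_r; auto. apply Kabs_1. Qed.

End Scalars.

Section VectorSpace.
Context {k : fkind} {E : Space k} (HE : Banach E).

Ltac banach_axiom := destruct HE as (?&?&?&?&?&?&?&?&?&?&?&?&?); auto.

Lemma vadd_assoc (x y z : E) : vadd x (vadd y z) = vadd (vadd x y) z.
Proof. banach_axiom. Qed.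
Lemma vadd_comm (x y : E) : vadd x y = vadd y x.
Proof. banach_axiom. Qed.
Lemma vadd_0 (x : E) : vadd x (vzero E) = x.
Proof. banach_axiom. Qed.
Lemma vadd_opp (x : E) : vadd x (vopp x) = vzero E.
Proof. banach_axiom. Qed.
Lemma vscal_assoc a b (x : E) : vscal a (vscal b x) = vscal (Kmul a b) x.
Proof. banach_axiom. Qed.
Lemma vscal_1 (x : E) : vscal (Kone k) x = x.
Proof. banach_axiom. Qed.
Lemma vscal_addv a (x y : E) : vscal a (vadd x y) = vadd (vscal a x) (vscal a y).
Proof. banach_axiom. Qed.
Lemma vscal_adds a b (x : E) : vscal (Kadd a b) x = vadd (vscal a x) (vscal b x).
Proof. banach_axiom. Qed.
Lemma vnorm_ge0 (x : E) : 0 <= vnorm x.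
Proof. banach_axiom. Qed.
Lemma vnorm_eq0 (x : E) : vnorm x = 0 -> x = vzero E.
Proof. banach_axiom. Qed.
Lemma vnorm_scal a (x : E) : vnorm (vscal a x) = Kabs a * vnorm x.
Proof. banach_axiom. Qed.
Lemma vnorm_triang (x y : E) : vnorm (vadd x y) <= vnorm x + vnorm y.
Proof. banach_axiom. Qed.

Lemma vadd_0_l (x : E) : vadd (vzero E) x = x.
Proof. rewrite vadd_comm; apply vadd_0. Qed.

Lemma vadd_cancel_l (x y z : E) : vadd x y = vadd x z -> y = z.
Proof.
  intro H. assert (H' : vadd (vopp x) (vadd x y) = vadd (vopp x) (vadd x z)) by (rewrite H; auto).
  rewrite !vadd_assoc, (vadd_comm (vopp x) x), vadd_opp, !vadd_0_l in H'. auto.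
Qed.

Lemma vadd_idem_eq0 (x : E) : vadd x x = x -> x = vzero E.
Proof. intro H. apply (vadd_cancel_l x). rewrite vadd_0; auto. Qed.

Lemma vscal_0 (x : E) : vscal (Kzero k) x = vzero E.
Proof. apply vadd_idem_eq0. rewrite <- vscal_adds, Kadd_0_l. auto. Qed.

Lemma vscal_v0 a : vscal a (vzero E) = vzero E.
Proof. apply vadd_idem_eq0. rewrite <- vscal_addv, vadd_0. auto. Qed.

Lemma vopp_scal (x : E) : vopp x = vscal (Kopp (Kone k)) x.
Proof.
  apply (vadd_cancel_l x). rewrite vadd_opp. rewrite <- (vscal_1 x) at 1.
  rewrite <- vscal_adds, Kadd_opp, vscal_0. auto.
Qed.

Lemma vnorm_0 : vnorm (vzero E) = 0.
Proof. rewrite <- (vscal_0 (vzero E)), vnorm_scal, Kabs_0. ring. Qed.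

Lemma vnorm_opp (x : E) : vnorm (vopp x) = vnorm x.
Proof. rewrite vopp_scal, vnorm_scal, Kabs_opp, Kabs_1. ring. Qed.

Lemma vsub_self (x : E) : vsub x x = vzero E.
Proof. apply vadd_opp. Qed.

Lemma vopp_add (x y : E) : vopp (vadd x y) = vadd (vopp x) (vopp y).
Proof. rewrite !vopp_scal, vscal_addv. auto. Qed.

Lemma vadd_add_swap (a b c d : E) : vadd (vadd a b) (vadd c d) = vadd (vadd a c) (vadd b d).
Proof. rewrite !vadd_assoc. f_equal. rewrite <- !vadd_assoc. f_equal. apply vadd_comm. Qed.

Lemma vsub_add (a b c d : E) : vsub (vadd a b) (vadd c d) = vadd (vsub a c) (vsub b d).
Proof. unfold vsub. rewrite vopp_add. apply vadd_add_swap. Qed.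

Lemma vscal_sub a (x y : E) : vscal a (vsub x y) = vsub (vscal a x) (vscal a y).
Proof. unfold vsub. rewrite vscal_addv, !vopp_scal, !vscal_assoc, Kmul_comm. auto. Qed.

Lemma vscal_subs a b (x : E) : vsub (vscal a x) (vscal b x) = vscal (Kadd a (Kopp b)) x.
Proof. unfold vsub. rewrite vscal_adds, vopp_scal, vscal_assoc, Kmul_opp_1. auto. Qed.

Lemma vsub_0 (x : E) : vsub x (vzero E) = x.
Proof. unfold vsub. rewrite vopp_scal, vscal_v0. apply vadd_0. Qed.

Lemma vnorm_sub_le (x y : E) : vnorm (vsub x y) <= vnorm x + vnorm y.
Proof. unfold vsub. rewrite <- (vnorm_opp y). apply vnorm_triang. Qed.

Lemma vsumn_add n (f g : nat -> E) :
  vsumn n (fun l => vadd (f l) (g l)) = vadd (vsumn n f) (vsumn n g).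
Proof. induction n; simpl. rewrite vadd_0; auto. rewrite IHn. apply vadd_add_swap. Qed.

Lemma vsumn_scal n a (f : nat -> E) : vsumn n (fun l => vscal a (f l)) = vscal a (vsumn n f).
Proof. induction n; simpl. rewrite vscal_v0; auto. rewrite IHn, vscal_addv. auto. Qed.

Lemma vsumn_ext n (f g : nat -> E) :
  (forall l, (l < n)%nat -> f l = g l) -> vsumn n f = vsumn n g.
Proof. induction n; simpl; intros; auto. rewrite IHn, H; auto. Qed.

Lemma vsumn_norm_le n (f : nat -> E) M :
  (forall l, (l < n)%nat -> vnorm (f l) <= M) -> vnorm (vsumn n f) <= INR n * M.
Proof.
  induction n; cbn [vsumn]; intros Hf. rewrite vnorm_0; simpl; lra.
  eapply Rle_trans. apply vnorm_triang. rewrite S_INR.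
  assert (vnorm (vsumn n f) <= INR n * M) by (apply IHn; intros; apply Hf; lia).
  specialize (Hf n (Nat.lt_succ_diag_r n)). lra.
Qed.

End VectorSpace.

Lemma Rsup_ub (S : R -> Prop) x : bound S -> S x -> x <= Rsup S.
Proof.
  intros Hb Hx. unfold Rsup. destruct excluded_middle_informative as [h|h].
  - destruct completeness as [s [H1 H2]]. simpl. apply H1; auto.
  - exfalso. apply h. split; eauto.
Qed.

Lemma Rsup_le (S : R -> Prop) M : (forall x, S x -> x <= M) -> 0 <= M -> Rsup S <= M.
Proof.
  intros H HM. unfold Rsup. destruct excluded_middle_informative as [h|h]; auto.
  destruct completeness as [s [H1 H2]]. simpl. apply H2. intros y Hy; auto.
Qed.

Lemma Rsup_ge0 (S : R -> Prop) : (forall x, S x -> 0 <= x) -> 0 <= Rsup S.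
Proof.
  intros H. unfold Rsup. destruct excluded_middle_informative as [h|h]; [|lra].
  destruct completeness as [s [H1 H2]]. simpl. destruct h as [_ [x Hx]].
  apply Rle_trans with x; auto.
Qed.

Lemma Rinf_le (S : R -> Prop) x : (forall y, S y -> 0 <= y) -> S x -> Rinf S <= x.
Proof.
  intros H Hx. unfold Rinf. assert (- x <= Rsup (fun y => S (- y))).
  { apply Rsup_ub. exists 0. intros y Hy. specialize (H _ Hy). lra.
    rewrite Ropp_involutive; auto. }
  lra.
Qed.

Lemma Rinf_ge (S : R -> Prop) M : (forall y, S y -> M <= y) -> (exists x, S x) -> M <= Rinf S.
Proof.
  intros H [x Hx]. unfold Rinf, Rsup. destruct excluded_middle_informative as [h|h].
  - destruct completeness as [s [H1 H2]]. simpl.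
    assert (s <= - M); [|lra]. apply H2. intros y Hy. specialize (H _ Hy). lra.
  - exfalso. apply h. split; [exists (- M)|exists (- x)]; intros; rewrite ?Ropp_involutive; auto.
    intros y Hy. specialize (H _ Hy). lra.
Qed.

Lemma Rinf_ge0 (S : R -> Prop) : (forall y, S y -> 0 <= y) -> 0 <= Rinf S.
Proof.
  intros H. destruct (classic (exists x, S x)). apply Rinf_ge; auto.
  unfold Rinf, Rsup. destruct excluded_middle_informative as [h|h]; [|lra].
  exfalso. destruct h as [_ [y Hy]]. eauto.
Qed.

Lemma Rinf_approx (S : R -> Prop) eps : (forall y, S y -> 0 <= y) -> (exists x, S x) ->
  0 < eps -> exists x, S x /\ x < Rinf S + eps.
Proof.
  intros H Hne He. apply NNPP. intro Hn.
  assert (Rinf S + eps <= Rinf S); [|lra].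
  apply Rinf_ge; auto. intros y Hy. apply Rnot_lt_le. intro. apply Hn. eauto.
Qed.

Lemma Rle_forall_eps x y : (forall eps, 0 < eps -> x <= y + eps) -> x <= y.
Proof. intro H. apply Rnot_lt_le. intro Hlt. specialize (H ((x - y) / 2)). lra. Qed.

Lemma R_Cauchy_converges (u : nat -> R) :
  (forall eps, 0 < eps -> exists N, forall i j, (N <= i)%nat -> (N <= j)%nat ->
     Rabs (u i + - u j) < eps) ->
  exists x, forall eps, 0 < eps -> exists N, forall i, (N <= i)%nat -> Rabs (u i + - x) < eps.
Proof.
  intro H. destruct (R_complete u) as [l Hl].
  - intros eps He. destruct (H eps He) as [N HN]. exists N. intros; apply HN; lia.
  - exists l. intros eps He. destruct (Hl eps He) as [N HN]. exists N. intros; apply HN; lia.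
Qed.

Lemma Kspace_Banach k : Banach (Kspace k).
Proof.
  unfold Banach; simpl.
  repeat split; intros;
    try solve [apply Kadd_opp | apply Kadd_assoc | apply Kadd_comm | apply Kmul_assoc
      | apply Kmul_1_l | apply Kmul_add_r | apply Kabs_ge0 | apply Kabs_mul
      | apply Kabs_triang | apply Kabs_eq0; auto
      | rewrite Kadd_comm; apply Kadd_0_l
      | rewrite Kmul_comm, Kmul_add_r, !(Kmul_comm _ x); auto].
  destruct k; simpl in *.
  - apply R_Cauchy_converges; auto.
  - assert (Hre : forall a b, Rabs a <= sqrt (a * a + b * b)).
    { intros a b. rewrite <- sqrt_Rsqr_abs. apply sqrt_le_1_alt. unfold Rsqr; nra. }
    assert (Habs_sum : forall a b, sqrt (a * a + b * b) <= Rabs a + Rabs b).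
    { intros a b. pose proof (Rabs_pos a); pose proof (Rabs_pos b).
      apply Rsqr_incr_0_var; [|lra]. rewrite Rsqr_sqrt by apply Rsqr_sum_ge0.
      rewrite Rsqr_plus, <- !Rsqr_abs. unfold Rsqr. nra. }
    destruct (R_Cauchy_converges (fun i => fst (u i))) as [x1 H1].
    { intros eps He. destruct (H eps He) as [N HN]. exists N. intros i j Hi Hj.
      eapply Rle_lt_trans; [|apply (HN i j Hi Hj)]. apply Hre. }
    destruct (R_Cauchy_converges (fun i => snd (u i))) as [x2 H2].
    { intros eps He. destruct (H eps He) as [N HN]. exists N. intros i j Hi Hj.
      eapply Rle_lt_trans; [|apply (HN i j Hi Hj)]. rewrite (Rplus_comm (_ * _)). apply Hre. }
    exists (x1, x2). intros eps He.
    destruct (H1 (eps / 2)) as [N1 HN1]; [lra|]. destruct (H2 (eps / 2)) as [N2 HN2]; [lra|].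
    exists (N1 + N2)%nat. intros i Hi. simpl.
    eapply Rle_lt_trans. apply Habs_sum.
    specialize (HN1 i ltac:(lia)); specialize (HN2 i ltac:(lia)). simpl in *. lra.
Qed.

(** * Multilinear maps *)

Lemma idx_eq {n} (i j : Idx n) : proj1_sig i = proj1_sig j -> i = j.
Proof. destruct i as [i hi], j as [j hj]; simpl; intro; subst. f_equal. apply le_unique. Qed.

Definition upd {n} {T : Type} (x : Idx n -> T) (i : Idx n) (v : T) : Idx n -> T :=
  fun j => if Nat.eqb (proj1_sig j) (proj1_sig i) then v else x j.

Lemma upd_same {n T} (x : Idx n -> T) i v : upd x i v i = v.
Proof. unfold upd. rewrite Nat.eqb_refl. auto. Qed.

Lemma upd_other {n T} (x : Idx n -> T) i j v : j <> i -> upd x i v j = x j.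
Proof.
  unfold upd. intro H. destruct (Nat.eqb_spec (proj1_sig j) (proj1_sig i)); auto.
  exfalso; apply H, idx_eq; auto.
Qed.

Definition natof {n} {T} (d : T) (a : Idx n -> T) (l : nat) : T :=
  match lt_dec l n with left h => a (exist _ l h) | right _ => d end.

Lemma natof_in {n T} (d : T) (a : Idx n -> T) (i : Idx n) : natof d a (proj1_sig i) = a i.
Proof.
  unfold natof. destruct lt_dec. f_equal. apply idx_eq; auto.
  exfalso; destruct i; simpl in *; lia.
Qed.

Fixpoint kprod {k} (r : nat) (g : nat -> Kt k) : Kt k :=
  match r with O => Kone k | S r' => Kmul (kprod r' g) (g r') end.

Lemma kprod_ext {k} r (g1 g2 : nat -> Kt k) :
  (forall i, (i < r)%nat -> g1 i = g2 i) -> kprod r g1 = kprod r g2.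
Proof. induction r; simpl; intros; auto. rewrite IHr, H; auto. Qed.

Lemma kprod_natof_iprod {k n} (a : Idx n -> Kt k) :
  kprod n (natof (Kone k) a) = iprod (Kone k) (@Kmul k) a.
Proof.
  induction n; simpl; auto. f_equal.
  - rewrite <- IHn. apply kprod_ext. intros i Hi. unfold natof.
    do 2 destruct lt_dec; try lia. f_equal. apply idx_eq; auto.
  - unfold natof. destruct lt_dec; [|lia]. f_equal. apply idx_eq; auto.
Qed.

Lemma iprod_const {k n} (a : Kt k) : iprod (Kone k) (@Kmul k) (fun _ : Idx n => a) = Kpow a n.
Proof. induction n; simpl; auto. rewrite IHn. auto. Qed.

Lemma iprod_constR n c : iprod 1 Rmult (fun _ : Idx n => c) = c ^ n.
Proof. induction n; simpl; auto. rewrite IHn. ring. Qed.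

Section Multilinear.
Context {k : fkind} {n : nat} {G F : Space k} (HG : Banach G) (HF : Banach F).
Context (A : MLmap (fun _ : Idx n => G) F) (HA : is_multilinear A).

Lemma ml_slot_zero (z : Idx n -> G) i : z i = vzero G -> A z = vzero F.
Proof.
  intro H. apply (vadd_idem_eq0 HF). rewrite <- (vscal_1 HF (A z)) at 2.
  symmetry. apply (HA i z z z (Kone k)). auto.
  rewrite H, (vscal_v0 HG), (vadd_0 HG). auto.
Qed.

Lemma ml_zero_arg : (1 <= n)%nat -> A (fun _ => vzero G) = vzero F.
Proof. intro H. apply (ml_slot_zero _ (exist _ 0%nat H)). auto. Qed.

Lemma ml_slot_scal (z : Idx n -> G) i a : A (upd z i (vscal a (z i))) = vscal a (A z).
Proof.
  rewrite <- (vadd_0_l HF (vscal a (A z))).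
  rewrite <- (ml_slot_zero (upd z i (vzero G)) i) by apply upd_same.
  apply HA with (i := i).
  - intros j Hj. rewrite !upd_other; auto.
  - rewrite !upd_same, (vadd_0_l HG). auto.
Qed.

Lemma ml_scal_first (a : Idx n -> Kt k) (y : Idx n -> G) r :
  A (fun i => if Nat.ltb (proj1_sig i) r then vscal (a i) (y i) else y i)
  = vscal (kprod r (natof (Kone k) a)) (A y).
Proof.
  induction r; simpl.
  - rewrite (vscal_1 HF). auto.
  - set (y_r := fun i : Idx n => if Nat.ltb (proj1_sig i) r then vscal (a i) (y i) else y i).
    destruct (lt_dec r n) as [h|h].
    + set (i0 := exist (fun l => (l < n)%nat) r h : Idx n).
      replace (fun i : Idx n => if Nat.ltb (proj1_sig i) (S r) then vscal (a i) (y i) else y i)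
        with (upd y_r i0 (vscal (a i0) (y_r i0))).
      * rewrite ml_slot_scal. unfold y_r. rewrite IHr, (vscal_assoc HF), Kmul_comm.
        rewrite <- (natof_in (Kone k) a i0). auto.
      * apply functional_extensionality. intro j. unfold upd, y_r. simpl.
        destruct (Nat.eqb_spec (proj1_sig j) r).
        -- assert (j = i0) by (apply idx_eq; auto). subst j. simpl.
           rewrite Nat.ltb_irrefl, (proj2 (Nat.ltb_lt r (S r))) by lia. auto.
        -- destruct (Nat.ltb_spec (proj1_sig j) r), (Nat.ltb_spec (proj1_sig j) (S r));
             auto; lia.
    + unfold natof at 2. destruct lt_dec; [lia|]. rewrite Kmul_comm, Kmul_1_l, <- IHr.
      f_equal. apply functional_extensionality. intros [j hj]; simpl.
      destruct (Nat.ltb_spec j r), (Nat.ltb_spec j (S r)); auto; lia.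
Qed.

Lemma ml_scal_all (a : Idx n -> Kt k) (y : Idx n -> G) :
  A (fun i => vscal (a i) (y i)) = vscal (iprod (Kone k) (@Kmul k) a) (A y).
Proof.
  rewrite <- kprod_natof_iprod, <- ml_scal_first. f_equal.
  apply functional_extensionality. intros [j hj]; simpl. destruct (Nat.ltb_spec j n); auto; lia.
Qed.

Lemma ml_homog a (x : G) : A (fun _ => vscal a x) = vscal (Kpow a n) (A (fun _ => x)).
Proof. rewrite <- iprod_const. apply (ml_scal_all (fun _ => a) (fun _ => x)). Qed.

End Multilinear.

(** * Polarization *)

Definition setn {T} (e : nat -> T) (i : nat) (v : T) : nat -> T :=
  fun j => if Nat.eqb j i then v else e j.

Lemma setn_lt {T} (e : nat -> T) i v l : (l < i)%nat -> setn e i v l = e l.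
Proof. unfold setn; intro. destruct (Nat.eqb_spec l i); auto; lia. Qed.

Lemma setn_eq {T} (e : nat -> T) i v : setn e i v i = v.
Proof. unfold setn. rewrite Nat.eqb_refl; auto. Qed.

Fixpoint sumr (m : nat) (e : nat -> R) : R :=
  match m with O => 0 | S m' => sumr m' e + e m' end.

Fixpoint prodr (m : nat) (g : nat -> R) : R :=
  match m with O => 1 | S m' => prodr m' g * g m' end.

Lemma sumr_ext m e1 e2 : (forall l, (l < m)%nat -> e1 l = e2 l) -> sumr m e1 = sumr m e2.
Proof. induction m; simpl; intros; auto. rewrite IHm, H; auto. Qed.

Lemma prodr_ext m g1 g2 : (forall l, (l < m)%nat -> g1 l = g2 l) -> prodr m g1 = prodr m g2.
Proof. induction m; simpl; intros; auto. rewrite IHm, H; auto. Qed.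

(* [sign_sum m F] is the sum over all sign vectors [e] in {1,-1}^m (coordinates
   from [m] on being 1) of [e 0 * ... * e (m-1) * F e]. *)
Fixpoint sign_sum (m : nat) (F : (nat -> R) -> R) : R :=
  match m with
  | O => F (fun _ => 1)
  | S m' => sign_sum m' (fun e => F (setn e m' 1)) - sign_sum m' (fun e => F (setn e m' (-1)))
  end.

Lemma sign_sum_ext m F1 F2 : (forall e, F1 e = F2 e) -> sign_sum m F1 = sign_sum m F2.
Proof. intro H. replace F2 with F1; auto. apply functional_extensionality; auto. Qed.

Lemma sign_sum_indep m : forall F l, (l < m)%nat ->
  (forall e v, F (setn e l v) = F e) -> sign_sum m F = 0.
Proof.
  induction m; intros F l Hl H; [lia|]. simpl.
  destruct (Nat.eq_dec l m) as [->|Hne].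
  - rewrite (sign_sum_ext m _ (fun e => F (setn e m (-1)))). ring.
    intro e. rewrite H. symmetry. apply H.
  - assert (Hswap : forall (e : nat -> R) v w, setn (setn e m w) l v = setn (setn e l v) m w).
    { intros e v w. apply functional_extensionality. intro j. unfold setn.
      destruct (Nat.eqb_spec j m), (Nat.eqb_spec j l); auto; lia. }
    rewrite (IHm _ l), (IHm _ l); try lia; try ring;
      intros e v; rewrite <- Hswap; apply H.
Qed.

Fixpoint cdiff (k : nat) (h : R -> R) (a : R) : R :=
  match k with O => h a | S k' => cdiff k' h (a + 1) - cdiff k' h (a - 1) end.

Lemma sign_sum_cdiff k : forall h a, sign_sum k (fun e => h (a + sumr k e)) = cdiff k h a.
Proof.
  induction k; intros; simpl. f_equal; ring.
  rewrite <- !IHk. f_equal; apply sign_sum_ext; intro e; f_equal;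
    rewrite setn_eq, (sumr_ext k (setn e k _) e) by (intros; apply setn_lt; auto); ring.
Qed.

Lemma cdiff_ext k h1 h2 a : (forall b, h1 b = h2 b) -> cdiff k h1 a = cdiff k h2 a.
Proof. intro H. replace h2 with h1; auto. apply functional_extensionality; auto. Qed.

Lemma cdiff_shift k : forall h a s, cdiff k (fun b => h (b + s)) a = cdiff k h (a + s).
Proof. induction k; intros; simpl; auto. rewrite !IHk. f_equal; f_equal; ring. Qed.

Lemma cdiff_sub k : forall h1 h2 a,
  cdiff k (fun b => h1 b - h2 b) a = cdiff k h1 a - cdiff k h2 a.
Proof. induction k; intros; simpl; auto. rewrite !IHk. ring. Qed.

Lemma cdiff_scal k : forall c h a, cdiff k (fun b => c * h b) a = c * cdiff k h a.
Proof. induction k; intros; simpl; auto. rewrite !IHk. ring. Qed.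

Lemma cdiff_sum k : forall (g : nat -> R -> R) N a,
  cdiff k (fun b => sum_f_R0 (fun i => g i b) N) a = sum_f_R0 (fun i => cdiff k (g i) a) N.
Proof. induction k; intros; simpl; auto. rewrite !IHk, <- minus_sum. auto. Qed.

Lemma cdiff_S k h a : cdiff (S k) h a = cdiff k (fun b => h (b + 1) - h (b - 1)) a.
Proof. simpl. rewrite cdiff_sub. unfold Rminus at 3 4. rewrite !cdiff_shift. auto. Qed.

Lemma sum_f_R0_zero f N : (forall i, (i <= N)%nat -> f i = 0) -> sum_f_R0 f N = 0.
Proof. induction N; simpl; intros. apply H; lia. rewrite IHN, H; auto. ring. Qed.

Lemma sum_f_R0_last f N : (forall i, (i < N)%nat -> f i = 0) -> sum_f_R0 f N = f N.
Proof.
  destruct N; intros; auto. rewrite tech5, sum_f_R0_zero. ring. intros; apply H; lia.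
Qed.

Lemma cdiff_pow k : forall j a, (j <= k)%nat ->
  cdiff k (fun b => b ^ j) a = if Nat.eqb j k then 2 ^ k * INR (fact k) else 0.
Proof.
  induction k; intros j a Hj.
  - assert (j = 0%nat) by lia. subst. simpl. ring.
  - rewrite cdiff_S.
    rewrite (cdiff_ext k _
      (fun b => sum_f_R0 (fun i => (C j i * (1 ^ (j - i) - (-1) ^ (j - i))) * b ^ i) j)).
    2:{ intro b. replace (b - 1) with (b + -1) by ring. rewrite !binomial, <- minus_sum.
        apply sum_eq. intros. ring. }
    rewrite cdiff_sum, (sum_eq _
      (fun i => (C j i * (1 ^ (j - i) - (-1) ^ (j - i))) * cdiff k (fun b => b ^ i) a))
      by (intros; apply cdiff_scal).
    destruct j as [|j].
    + simpl. ring_simplify. destruct k; auto.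
    + rewrite tech5, Nat.sub_diag.
      replace (1 ^ 0 - (-1) ^ 0) with 0 by (simpl; ring).
      rewrite Rmult_0_r, Rmult_0_l, Rplus_0_r.
      change (Nat.eqb (S j) (S k)) with (Nat.eqb j k).
      destruct (Nat.eqb_spec j k) as [->|Hjk].
      * rewrite sum_f_R0_last.
        -- rewrite IHk, Nat.eqb_refl by lia.
           replace (S k - k)%nat with 1%nat by lia.
           unfold C. replace (S k - k)%nat with 1%nat by lia.
           rewrite (fact_simpl k), mult_INR. simpl pow.
           pose proof (INR_fact_neq_0 k). simpl (fact 1). change (INR 1) with 1. field; auto.
        -- intros i Hi. rewrite IHk by lia. destruct (Nat.eqb_spec i k); [lia|]. ring.
      * rewrite sum_f_R0_zero. ring. intros i Hi. rewrite IHk by lia.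
        destruct (Nat.eqb_spec i k); [lia|]. ring.
Qed.

Lemma sign_sum_pow m : sign_sum m (fun e => (sumr m e) ^ m) = 2 ^ m * INR (fact m).
Proof.
  rewrite (sign_sum_ext m _ (fun e => (0 + sumr m e) ^ m)) by (intro; f_equal; ring).
  rewrite (sign_sum_cdiff m (fun b => b ^ m) 0), cdiff_pow, Nat.eqb_refl; auto.
Qed.

Lemma surj_inj_finite m (f : nat -> nat) :
  (forall l, (l < m)%nat -> exists i, (i < m)%nat /\ f i = l) ->
  forall i j, (i < m)%nat -> (j < m)%nat -> f i = f j -> i = j.
Proof.
  intros Hs. pose proof (List.seq_NoDup m 0) as Hseq.
  assert (ND : List.NoDup (List.map f (List.seq 0 m))).
  { apply (List.NoDup_incl_NoDup (l := List.seq 0 m)); auto.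
    - rewrite List.length_map; lia.
    - intros y Hy. apply List.in_seq in Hy. destruct (Hs y) as [i [Hi Hfi]]; [lia|].
      rewrite <- Hfi. apply List.in_map, List.in_seq. lia. }
  intros i j Hi Hj Hij. rewrite List.NoDup_nth in ND.
  apply (ND i j); rewrite ?List.length_map, ?List.length_seq; auto.
  rewrite !(List.nth_indep _ 0%nat (f 0%nat)) by (rewrite List.length_map, List.length_seq; lia).
  rewrite !List.map_nth, !List.seq_nth by lia. auto.
Qed.

Definition is_signs (e : nat -> R) := forall j, e j = 1 \/ e j = -1.

Lemma is_signs_setn e i v : is_signs e -> (v = 1 \/ v = -1) -> is_signs (setn e i v).
Proof. intros H Hv j. unfold setn. destruct (Nat.eqb j i); auto. Qed.

Fixpoint vsign_sum {k} {E : Space k} (m : nat) (F : (nat -> R) -> E) : E :=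
  match m with
  | O => F (fun _ => 1)
  | S m' => vsub (vsign_sum m' (fun e => F (setn e m' 1)))
                 (vsign_sum m' (fun e => F (setn e m' (-1))))
  end.

(* [vsum_fun r N H] is the sum of [H f] over all maps [f : {0..r-1} -> {0..N-1}]
   (with [f] equal to 0 from [r] on). *)
Fixpoint vsum_fun {k} {E : Space k} (r N : nat) (H : (nat -> nat) -> E) : E :=
  match r with
  | O => H (fun _ => 0%nat)
  | S r' => vsumn N (fun l => vsum_fun r' N (fun f => H (setn f r' l)))
  end.

Section SignedSums.
Context {k : fkind} {E : Space k} (HE : Banach E).

Lemma vsign_sum_ext m (F1 F2 : (nat -> R) -> E) :
  (forall e, F1 e = F2 e) -> vsign_sum m F1 = vsign_sum m F2.
Proof. intro H. replace F2 with F1; auto. apply functional_extensionality; auto. Qed.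

Lemma vsign_sum_scal_Kr m : forall (g : (nat -> R) -> R) (v : E),
  vsign_sum m (fun e => vscal (Kr k (g e)) v) = vscal (Kr k (sign_sum m g)) v.
Proof.
  induction m; intros; simpl; auto. rewrite !IHm, (vscal_subs HE).
  unfold Rminus. rewrite Kr_add, Kr_opp. auto.
Qed.

Lemma vsign_sum_norm_le m : forall (F : (nat -> R) -> E) M,
  (forall e, is_signs e -> vnorm (F e) <= M) -> vnorm (vsign_sum m F) <= 2 ^ m * M.
Proof.
  induction m; intros F M H; simpl.
  - rewrite Rmult_1_l. apply H. intro; auto.
  - eapply Rle_trans. apply (vnorm_sub_le HE).
    assert (vnorm (vsign_sum m (fun e => F (setn e m 1))) <= 2 ^ m * M)
      by (apply IHm; intros; apply H, is_signs_setn; auto).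
    assert (vnorm (vsign_sum m (fun e => F (setn e m (-1)))) <= 2 ^ m * M)
      by (apply IHm; intros; apply H, is_signs_setn; auto).
    lra.
Qed.

Lemma vsum_fun_ext r : forall N (H1 H2 : (nat -> nat) -> E),
  (forall f, H1 f = H2 f) -> vsum_fun r N H1 = vsum_fun r N H2.
Proof. intros. replace H2 with H1; auto. apply functional_extensionality; auto. Qed.

Lemma vsum_fun_add r : forall N (H1 H2 : (nat -> nat) -> E),
  vsum_fun r N (fun f => vadd (H1 f) (H2 f)) = vadd (vsum_fun r N H1) (vsum_fun r N H2).
Proof.
  induction r; intros; simpl; auto. rewrite <- (vsumn_add HE). apply vsumn_ext. intros; apply IHr.
Qed.

Lemma vsum_fun_scal r : forall N a (H : (nat -> nat) -> E),
  vsum_fun r N (fun f => vscal a (H f)) = vscal a (vsum_fun r N H).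
Proof.
  induction r; intros; simpl; auto. rewrite <- (vsumn_scal HE). apply vsumn_ext. intros; apply IHr.
Qed.

Lemma vsum_fun_sub r N (H1 H2 : (nat -> nat) -> E) :
  vsum_fun r N (fun f => vsub (H1 f) (H2 f)) = vsub (vsum_fun r N H1) (vsum_fun r N H2).
Proof.
  unfold vsub. rewrite (vopp_scal HE), <- vsum_fun_scal, <- vsum_fun_add.
  apply vsum_fun_ext. intro; rewrite (vopp_scal HE); auto.
Qed.

Lemma vsign_sum_vsum_fun m : forall r N (H : (nat -> R) -> (nat -> nat) -> E),
  vsign_sum m (fun e => vsum_fun r N (H e)) = vsum_fun r N (fun f => vsign_sum m (fun e => H e f)).
Proof. induction m; intros; simpl; auto. rewrite !IHm, vsum_fun_sub. auto. Qed.

Lemma vsumn_scal_Kr N (e : nat -> R) (x : E) :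
  vsumn N (fun l => vscal (Kr k (e l)) x) = vscal (Kr k (sumr N e)) x.
Proof.
  induction N; simpl. rewrite Kr_0, (vscal_0 HE); auto.
  rewrite IHN, Kr_add, (vscal_adds HE). auto.
Qed.

End SignedSums.

Lemma kprod_Kr {k} r (g : nat -> R) : kprod r (fun i => Kr k (g i)) = Kr k (prodr r g).
Proof. induction r; simpl. symmetry; apply Kr_1. rewrite IHr, Kr_mul. auto. Qed.

Section Expansion.
Context {k : fkind} {m : nat} {G E : Space k} (HG : Banach G) (HE : Banach E).
Context (B : MLmap (fun _ : Idx m => G) E) (HB : is_multilinear B).

Lemma ml_slot_vsumn (W : Idx m -> G) i0 N (c : nat -> Kt k) (w : nat -> G) :
  B (upd W i0 (vsumn N (fun l => vscal (c l) (w l))))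
  = vsumn N (fun l => vscal (c l) (B (upd W i0 (w l)))).
Proof.
  induction N; simpl.
  - apply (ml_slot_zero HG HE B HB _ i0). apply upd_same.
  - rewrite <- IHN. apply HB with (i := i0).
    + intros j Hj. rewrite !upd_other; auto.
    + rewrite !upd_same. auto.
Qed.

Lemma ml_expand_first N (c : nat -> Kt k) (w : nat -> G) r : (r <= m)%nat ->
  forall u : Idx m -> G,
  B (fun i => if Nat.ltb (proj1_sig i) r then vsumn N (fun l => vscal (c l) (w l)) else u i) =
  vsum_fun r N (fun f => vscal (kprod r (fun i => c (f i)))
     (B (fun i => if Nat.ltb (proj1_sig i) r then w (f (proj1_sig i)) else u i))).
Proof.
  induction r; intros Hr u.
  - simpl. rewrite (vscal_1 HE). auto.
  - set (V := vsumn N (fun l => vscal (c l) (w l))).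
    set (i0 := exist (fun l => (l < m)%nat) r Hr : Idx m).
    set (W := fun i : Idx m => if Nat.ltb (proj1_sig i) r then V else u i).
    transitivity (B (upd W i0 V)).
    { f_equal. apply functional_extensionality. intro i. unfold upd, W. simpl.
      destruct (Nat.eqb_spec (proj1_sig i) r), (Nat.ltb_spec (proj1_sig i) (S r)),
        (Nat.ltb_spec (proj1_sig i) r); auto; lia. }
    unfold V. rewrite ml_slot_vsumn. simpl vsum_fun. apply vsumn_ext. intros l Hl.
    transitivity (vscal (c l)
      (B (fun i => if Nat.ltb (proj1_sig i) r then V else upd u i0 (w l) i))).
    { f_equal. f_equal. apply functional_extensionality. intro i. unfold upd, W. simpl.
      destruct (Nat.eqb_spec (proj1_sig i) r), (Nat.ltb_spec (proj1_sig i) r); auto; lia. }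
    unfold V. rewrite IHr by lia. rewrite <- (vsum_fun_scal HE). apply vsum_fun_ext. intro f.
    rewrite (vscal_assoc HE). f_equal.
    + simpl. rewrite Kmul_comm, setn_eq. f_equal.
      apply kprod_ext. intros; rewrite setn_lt; auto.
    + f_equal. apply functional_extensionality. intro i. unfold upd. simpl.
      destruct (Nat.ltb_spec (proj1_sig i) r), (Nat.ltb_spec (proj1_sig i) (S r)); try lia.
      * rewrite setn_lt; auto.
      * destruct (Nat.eqb_spec (proj1_sig i) r) as [->|]; [|lia]. rewrite setn_eq. auto.
      * destruct (Nat.eqb_spec (proj1_sig i) r); [lia|]. auto.
Qed.

End Expansion.

Definition signed_comb {k m} {G : Space k} (e : nat -> R) (x : Idx m -> G) : G :=
  vsumn m (fun l => vscal (Kr k (e l)) (natof (vzero G) x l)).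

(* The polarization formula
     S(x_1,..,x_m) = 1/(2^m m!) sum_{e in {1,-1}^m} e_1..e_m B(sum e_l x_l, .., sum e_l x_l):
   the symmetric m-linear map with the same diagonal as B. *)
Definition polarization {k m} {G E : Space k} (B : MLmap (fun _ : Idx m => G) E)
  (x : Idx m -> G) : E :=
  vscal (Kr k (/ (2 ^ m * INR (fact m)))) (vsign_sum m (fun e => B (fun _ => signed_comb e x))).

Definition polar_coeff (m : nat) (f : nat -> nat) : R :=
  sign_sum m (fun e => prodr m (fun i => e (f i))).

Lemma polar_coeff_surj m f : polar_coeff m f <> 0 ->
  forall l, (l < m)%nat -> exists i, (i < m)%nat /\ f i = l.
Proof.
  intros H l Hl. apply NNPP. intro Hn. apply H. unfold polar_coeff.
  apply (sign_sum_indep m _ l Hl). intros e v. apply prodr_ext. intros i Hi.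
  unfold setn. destruct (Nat.eqb_spec (f i) l); auto. exfalso; apply Hn; eauto.
Qed.

Section Polarization.
Context {k : fkind} {m : nat} {G E : Space k} (HG : Banach G) (HE : Banach E).
Context (B : MLmap (fun _ : Idx m => G) E) (HB : is_multilinear B).

Lemma polarization_expand x : polarization B x =
  vscal (Kr k (/ (2 ^ m * INR (fact m))))
    (vsum_fun m m (fun f => vscal (Kr k (polar_coeff m f))
       (B (fun i => natof (vzero G) x (f (proj1_sig i)))))).
Proof.
  unfold polarization. f_equal.
  rewrite (vsign_sum_ext m _ (fun e => vsum_fun m m (fun f =>
     vscal (kprod m (fun i => Kr k (e (f i))))
       (B (fun i => if Nat.ltb (proj1_sig i) m then natof (vzero G) x (f (proj1_sig i))
                    else vzero G))))).
  - rewrite (vsign_sum_vsum_fun HE). apply vsum_fun_ext. intro f. unfold polar_coeff.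
    rewrite <- (vsign_sum_scal_Kr HE). apply vsign_sum_ext. intro e. rewrite kprod_Kr.
    do 2 f_equal. apply functional_extensionality. intros [i hi]; simpl.
    destruct (Nat.ltb_spec i m); auto; lia.
  - intro e. rewrite <- (ml_expand_first HG HE B HB m (fun l => Kr k (e l))
      (natof (vzero G) x) m (le_n m) (fun _ => vzero G)).
    f_equal. apply functional_extensionality. intros [i hi]; simpl.
    destruct (Nat.ltb_spec i m); auto; lia.
Qed.

(* Only bijective reindexings [f] carry a nonzero coefficient, and reindexing the
   arguments of a multilinear map by a bijection keeps it multilinear. *)
Lemma ml_reindex_multilinear f : polar_coeff m f <> 0 ->
  is_multilinear (fun x : Idx m -> G => B (fun i => natof (vzero G) x (f (proj1_sig i)))).
Proof.
  intros Hk i x y z a Hj Hi.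
  destruct (polar_coeff_surj m f Hk (proj1_sig i) (proj2_sig i)) as [i1 [Hi1 Hfi1]].
  pose proof (surj_inj_finite m f (polar_coeff_surj m f Hk)) as Hinj.
  apply HB with (i := exist _ i1 Hi1).
  - intros [j hj] Hne. simpl.
    assert (f j <> proj1_sig i).
    { intro. apply Hne. apply idx_eq; simpl. apply Hinj; auto. congruence. }
    unfold natof. destruct lt_dec as [h|h]; auto.
    apply Hj. intro. subst i. simpl in *. auto.
  - simpl. rewrite Hfi1, !natof_in. auto.
Qed.

Lemma polarization_multilinear : is_multilinear (polarization B).
Proof.
  intros i x y z a Hj Hi. rewrite !polarization_expand.
  rewrite (vscal_assoc HE), Kmul_comm, <- (vscal_assoc HE), <- (vscal_addv HE). f_equal.
  rewrite <- (vsum_fun_scal HE), <- (vsum_fun_add HE). apply vsum_fun_ext. intro f.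
  destruct (Req_dec (polar_coeff m f) 0) as [H0|H0].
  - rewrite H0, Kr_0, !(vscal_0 HE), (vscal_v0 HE), (vadd_0 HE). auto.
  - rewrite (ml_reindex_multilinear f H0 i x y z a Hj Hi).
    rewrite (vscal_addv HE), !(vscal_assoc HE), Kmul_comm. auto.
Qed.

Lemma polarization_diag x : polarization B (fun _ => x) = B (fun _ => x).
Proof.
  unfold polarization.
  rewrite (vsign_sum_ext m _ (fun e => vscal (Kr k ((sumr m e) ^ m)) (B (fun _ => x)))).
  - rewrite (vsign_sum_scal_Kr HE), (vscal_assoc HE), <- Kr_mul, sign_sum_pow, Rinv_l, Kr_1.
    + apply (vscal_1 HE).
    + apply Rmult_integral_contrapositive_currified.
      apply pow_nonzero; lra. apply INR_fact_neq_0.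
  - intro e. unfold signed_comb.
    rewrite (vsumn_ext m _ (fun l => vscal (Kr k (e l)) x)).
    + rewrite (vsumn_scal_Kr HG), (ml_homog HG HE B HB), Kr_pow. auto.
    + intros l Hl. unfold natof. destruct lt_dec; auto; lia.
Qed.

End Polarization.

Section Continuity.
Context {k : fkind} {m : nat} {G E : Space k} (HG : Banach G) (HE : Banach E).

Let cont (T : MLmap (fun _ : Idx m => G) E) := is_cont_ml T.

Lemma cont_ml_const (c : E) : cont (fun _ => c).
Proof.
  intros x eps He. exists 1. split; [lra|]. intros. rewrite (vsub_self HE), (vnorm_0 HE). auto.
Qed.

Lemma cont_ml_scal T a : cont T -> cont (fun x => vscal a (T x)).
Proof.
  intros H x eps He. pose proof (Kabs_ge0 k a).
  destruct (H x (eps / (Kabs a + 1))) as [d [Hd Hy]]; [apply Rdiv_lt_0_compat; lra|].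
  exists d; split; auto. intros y Hyd. rewrite <- (vscal_sub HE), (vnorm_scal HE).
  specialize (Hy y Hyd). pose proof (vnorm_ge0 HE (vsub (T y) (T x))).
  apply Rle_lt_trans with ((Kabs a + 1) * vnorm (vsub (T y) (T x))). nra.
  replace eps with ((Kabs a + 1) * (eps / (Kabs a + 1))) by (field; lra).
  apply Rmult_lt_compat_l; lra.
Qed.

Lemma cont_ml_add T1 T2 : cont T1 -> cont T2 -> cont (fun x => vadd (T1 x) (T2 x)).
Proof.
  intros H1 H2 x eps He. destruct (H1 x (eps / 2)) as [d1 [Hd1 Hy1]]; [lra|].
  destruct (H2 x (eps / 2)) as [d2 [Hd2 Hy2]]; [lra|].
  exists (Rmin d1 d2). split. apply Rmin_pos; auto. intros y Hy.
  rewrite (vsub_add HE). eapply Rle_lt_trans. apply (vnorm_triang HE).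
  assert (vnorm (vsub (T1 y) (T1 x)) < eps / 2).
  { apply Hy1. intro j. specialize (Hy j). pose proof (Rmin_l d1 d2). lra. }
  assert (vnorm (vsub (T2 y) (T2 x)) < eps / 2).
  { apply Hy2. intro j. specialize (Hy j). pose proof (Rmin_r d1 d2). lra. }
  lra.
Qed.

Lemma cont_ml_vsumn N (H : (Idx m -> G) -> nat -> E) :
  (forall l, cont (fun x => H x l)) -> cont (fun x => vsumn N (H x)).
Proof. intro Hc. induction N; simpl. apply cont_ml_const. apply cont_ml_add; auto. Qed.

Lemma cont_ml_vsum_fun r : forall N (H : (Idx m -> G) -> (nat -> nat) -> E),
  (forall f, cont (fun x => H x f)) -> cont (fun x => vsum_fun r N (H x)).
Proof.
  induction r; intros N H Hc; simpl. apply Hc.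
  apply cont_ml_vsumn. intro l. apply (IHr N (fun x f => H x (setn f r l))). intro f; apply Hc.
Qed.

Lemma cont_ml_reindex (B : MLmap (fun _ : Idx m => G) E) (f : nat -> nat) :
  cont B -> cont (fun x => B (fun i => natof (vzero G) x (f (proj1_sig i)))).
Proof.
  intros HBc x eps He.
  destruct (HBc (fun i => natof (vzero G) x (f (proj1_sig i))) eps He) as [d [Hd Hy]].
  exists d; split; auto. intros y Hyd. apply Hy. intro j. unfold natof.
  destruct lt_dec; auto. rewrite (vsub_self HG), (vnorm_0 HG); auto.
Qed.

Lemma polarization_cont (B : MLmap (fun _ : Idx m => G) E) :
  is_multilinear B -> is_cont_ml B -> is_cont_ml (polarization B).
Proof.
  intros HB HBc.
  replace (polarization B) with (fun x : Idx m -> G => vscal (Kr k (/ (2 ^ m * INR (fact m))))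
    (vsum_fun m m (fun f => vscal (Kr k (polar_coeff m f))
       (B (fun i => natof (vzero G) x (f (proj1_sig i))))))).
  - apply cont_ml_scal, cont_ml_vsum_fun. intro f. apply cont_ml_scal, cont_ml_reindex; auto.
  - apply functional_extensionality. intro x. symmetry. apply (polarization_expand HG HE B HB).
Qed.

End Continuity.

Lemma Cmm_ge0 m : 0 <= Cmm m.
Proof.
  unfold Cmm. apply Rmult_le_pos. apply pow_le, pos_INR.
  left; apply Rinv_0_lt_compat, INR_fact_lt_0.
Qed.

Section PolarizationNorm.
Context {k : fkind} {m : nat} {G E : Space k} (HG : Banach G) (HE : Banach E).
Context (B : MLmap (fun _ : Idx m => G) E) (HB : is_multilinear B) (HBc : is_cont_ml B).
Context (Hm : (1 <= m)%nat).

Let Q := fun y : G => B (fun _ => y).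

(* Continuity at 0 bounds [Q] on a small ball, and homogeneity spreads this to the unit ball. *)
Lemma ml_diag_bounded : exists M, forall y, vnorm y <= 1 -> vnorm (Q y) <= M.
Proof.
  destruct (HBc (fun _ => vzero G) 1 Rlt_0_1) as [d [Hd Hc]].
  set (s := d / 2). assert (Hs : 0 < s) by (unfold s; lra).
  assert (Hsm : 0 < s ^ m) by (apply pow_lt; auto).
  exists (/ (s ^ m)). intros y Hy.
  specialize (Hc (fun _ => vscal (Kr k s) y)).
  rewrite (ml_homog HG HE B HB), (ml_zero_arg HG HE B HB Hm), (vsub_0 HE), (vnorm_scal HE),
    <- Kr_pow, Kabs_Kr, Rabs_right in Hc by (apply Rle_ge, pow_le; lra).
  assert (s ^ m * vnorm (Q y) < 1).
  { apply Hc. intro j. rewrite (vsub_0 HG), (vnorm_scal HG), Kabs_Kr, Rabs_right by lra.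
    unfold s. pose proof (vnorm_ge0 HG y). nra. }
  apply Rmult_le_reg_l with (s ^ m); auto. rewrite Rinv_r by lra. lra.
Qed.

Lemma pnorm_diag_ge0 : 0 <= pnorm Q.
Proof. apply Rsup_ge0. intros r [x [_ ->]]. apply (vnorm_ge0 HE). Qed.

Lemma ml_diag_norm_le y : vnorm (Q y) <= pnorm Q * (vnorm y) ^ m.
Proof.
  destruct ml_diag_bounded as [M HM].
  destruct (Req_dec (vnorm y) 0) as [H0|H0].
  - apply (vnorm_eq0 HG) in H0. subst y. unfold Q.
    rewrite (ml_zero_arg HG HE B HB Hm), (vnorm_0 HE), (vnorm_0 HG), pow_i by lia. lra.
  - pose proof (vnorm_ge0 HG y). set (ny := vnorm y) in *.
    assert (Hny : 0 < ny) by lra.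
    assert (Hnym : 0 < ny ^ m) by (apply pow_lt; auto).
    set (y' := vscal (Kr k (/ ny)) y).
    assert (Hy' : vnorm y' = 1).
    { unfold y'. rewrite (vnorm_scal HG), Kabs_Kr, Rabs_right.
      unfold ny; field; auto. apply Rle_ge; left; apply Rinv_0_lt_compat; auto. }
    assert (Hle : vnorm (Q y') <= pnorm Q).
    { apply Rsup_ub. exists M. intros r [x [Hx ->]]. apply HM; auto. exists y'. split; auto. lra. }
    unfold Q, y' in Hle. rewrite (ml_homog HG HE B HB), (vnorm_scal HE), <- Kr_pow, Kabs_Kr,
      Rabs_right, pow_inv in Hle
      by (apply Rle_ge, pow_le; left; apply Rinv_0_lt_compat; auto).
    apply Rmult_le_compat_l with (r := ny ^ m) in Hle; [|lra].
    rewrite <- Rmult_assoc, Rinv_r, Rmult_1_l in Hle by lra. unfold Q. lra.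
Qed.

Lemma mlnorm_polarization_le : mlnorm (polarization B) <= Cmm m * pnorm Q.
Proof.
  pose proof pnorm_diag_ge0 as Hp.
  assert (Hc : 0 < 2 ^ m * INR (fact m))
    by (apply Rmult_lt_0_compat; [apply pow_lt; lra | apply INR_fact_lt_0]).
  apply Rsup_le; [|apply Rmult_le_pos; auto using Cmm_ge0].
  intros r [x [Hx ->]]. unfold polarization.
  rewrite (vnorm_scal HE), Kabs_Kr,
    Rabs_right by (apply Rle_ge; left; apply Rinv_0_lt_compat; auto).
  assert (Hsum : vnorm (vsign_sum m (fun e => Q (signed_comb e x)))
                 <= 2 ^ m * (pnorm Q * INR m ^ m)).
  { apply (vsign_sum_norm_le HE). intros e He. eapply Rle_trans. apply ml_diag_norm_le.
    apply Rmult_le_compat_l; auto. apply pow_incr. split. apply (vnorm_ge0 HG).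
    unfold signed_comb. rewrite <- (Rmult_1_r (INR m)). apply (vsumn_norm_le HG).
    intros l Hl. rewrite (vnorm_scal HG), Kabs_Kr.
    assert (Rabs (e l) = 1) as -> by (destruct (He l) as [-> | ->];
      unfold Rabs; destruct Rcase_abs; lra).
    rewrite Rmult_1_l. change l with (proj1_sig (exist (fun i => (i < m)%nat) l Hl)).
    rewrite natof_in. apply Hx. }
  apply Rle_trans with (/ (2 ^ m * INR (fact m)) * (2 ^ m * (pnorm Q * INR m ^ m))).
  - apply Rmult_le_compat_l; auto. left; apply Rinv_0_lt_compat; auto.
  - right. unfold Cmm. field. split. apply INR_fact_neq_0. apply pow_nonzero; lra.
Qed.

End PolarizationNorm.

Lemma is_poly_polarization {k m} {G E : Space k} (Q : G -> E) :
  (1 <= m)%nat -> Banach G -> Banach E -> is_poly m Q ->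
  exists S : MLmap (fun _ : Idx m => G) E,
    cml S /\ (forall x, S (fun _ => x) = Q x) /\ mlnorm S <= Cmm m * pnorm Q.
Proof.
  intros Hm HG HE [B [[HBm HBc] HQB]].
  replace Q with (fun y => B (fun _ => y)) by (apply functional_extensionality; auto).
  exists (polarization B). split; [split|split].
  - apply (polarization_multilinear HG HE B HBm).
  - apply (polarization_cont HG HE B HBm HBc).
  - apply (polarization_diag HG HE B HBm).
  - apply (mlnorm_polarization_le HG HE B HBm HBc Hm).
Qed.

(** * The quasi-norm of P^H *)

Section Rpow.
Context (p : R) (Hp : 0 < p).

Lemma rpow_ge0 x : 0 <= rpow x p.
Proof. unfold rpow. destruct Rle_dec; [lra|]. left. apply exp_pos. Qed.

Lemma rpow_0 : rpow 0 p = 0.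
Proof. unfold rpow. destruct Rle_dec; lra. Qed.

Lemma rpow_pos x : 0 < x -> 0 < rpow x p.
Proof. intro. unfold rpow. destruct Rle_dec; [lra|]. apply exp_pos. Qed.

Lemma rpow_lt x y : 0 <= x -> x < y -> rpow x p < rpow y p.
Proof.
  intros Hx Hxy. destruct (Req_dec x 0) as [->|]. rewrite rpow_0. apply rpow_pos; auto.
  unfold rpow. do 2 (destruct Rle_dec; [lra|]). apply Rlt_Rpower_l; lra.
Qed.

Lemma rpow_le x y : 0 <= x -> x <= y -> rpow x p <= rpow y p.
Proof. intros Hx [H|<-]. left; apply rpow_lt; auto. lra. Qed.

Lemma rpow_lt_inv x y : 0 <= x -> 0 <= y -> rpow x p < rpow y p -> x < y.
Proof. intros Hx Hy H. destruct (Rlt_le_dec x y); auto. pose proof (rpow_le y x Hy r). lra. Qed.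

Lemma rpow_surj t : 0 < t -> exists y, 0 < y /\ rpow y p = t.
Proof.
  intro Ht. exists (Rpower t (/ p)). split. apply exp_pos.
  unfold rpow. destruct Rle_dec as [Hle|].
  - pose proof (exp_pos (/ p * ln t)). unfold Rpower in Hle. lra.
  - rewrite Rpower_mult, Rinv_l, Rpower_1; lra.
Qed.

Lemma rpow_add_exists x d : 0 <= x -> 0 < d -> exists e, 0 < e /\ rpow (x + e) p = rpow x p + d.
Proof.
  intros Hx Hd. destruct (rpow_surj (rpow x p + d)) as [y [Hy Hyr]]. pose proof (rpow_ge0 x); lra.
  exists (y - x). split. apply Rlt_0_minus, rpow_lt_inv; auto; lra.
  replace (x + (y - x)) with y by ring. auto.
Qed.

End Rpow.

Section PolynomialComponent.
Context {k : fkind} (p : R) (HM : MLclass k) (HN : MLclassNorm k).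
Context {n : nat} {E F : Space k} (HF : Banach F) (Hp : 0 < p).
Context (Hps : pnormed_subspace ml_zero ml_add ml_scal
                 (HM n (fun _ : Idx n => E) F) (HN n (fun _ : Idx n => E) F) p).

Let HMn := HM n (fun _ : Idx n => E) F.
Let HNn := HN n (fun _ : Idx n => E) F.
Let PHn := PH HM n E F.
Let PHNn := PHnorm HM HN n E F.

Definition rep (P : E -> F) (A : MLmap (fun _ : Idx n => E) F) :=
  HMn A /\ forall x, P x = A (fun _ => x).

Lemma HN_ge0 A : HMn A -> 0 <= HNn A.
Proof. destruct Hps as (_&_&_&H&_). auto. Qed.

Lemma PHnorm_ge0 P : 0 <= PHNn P.
Proof. apply Rinf_ge0. intros y [A [HA [_ ->]]]. apply HN_ge0; auto. Qed.

Lemma PHnorm_le_rep P A : rep P A -> PHNn P <= HNn A.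
Proof.
  intros [HA HP]. apply Rinf_le. intros y [B [HB [_ ->]]]. apply HN_ge0; auto. exists A; auto.
Qed.

Lemma PHnorm_approx P eps : PHn P -> 0 < eps -> exists A, rep P A /\ HNn A < PHNn P + eps.
Proof.
  intros [A0 [HA0 HP0]] He.
  destruct (Rinf_approx (fun r => exists A, HMn A /\ (forall x, P x = A (fun _ => x)) /\
    r = HNn A) eps) as [r [[A [HA [HP ->]]] Hr]]; auto.
  - intros y [B [HB [_ ->]]]. apply HN_ge0; auto.
  - exists (HNn A0), A0; auto.
  - exists A; split; auto. split; auto.
Qed.

Lemma PHnorm_ge_scaled P c K : PHn P -> 0 <= K ->
  (forall A, rep P A -> c <= K * HNn A) -> c <= K * PHNn P.
Proof.
  intros HP HK H. apply Rle_forall_eps. intros eps He.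
  destruct (PHnorm_approx P (eps / (K + 1)) HP) as [A [HA HAn]]; [apply Rdiv_lt_0_compat; lra|].
  apply Rle_trans with (K * HNn A); auto.
  apply Rle_trans with (K * (PHNn P + eps / (K + 1))); [apply Rmult_le_compat_l; lra|].
  assert (K * (eps / (K + 1)) <= eps); [|lra].
  unfold Rdiv. rewrite <- Rmult_assoc. apply Rmult_le_reg_r with (K + 1); [lra|].
  rewrite Rmult_assoc, Rinv_l, Rmult_1_r by lra. nra.
Qed.

Lemma PH_zero : PHn fn_zero.
Proof. destruct Hps as (H0&_). exists ml_zero; split; auto. Qed.

Lemma PHnorm_zero : PHNn fn_zero = 0.
Proof.
  apply Rle_antisym; [|apply PHnorm_ge0].
  destruct Hps as (H0&_&_&_&Hdef&_). rewrite <- (proj2 (Hdef _ H0) eq_refl).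
  apply PHnorm_le_rep. split; auto.
Qed.

Lemma PH_add P Q : PHn P -> PHn Q -> PHn (fn_add P Q).
Proof.
  intros [A [HA HPA]] [B [HB HQB]]. exists (ml_add A B). split. apply Hps; auto.
  intro x. unfold fn_add, ml_add. rewrite HPA, HQB. auto.
Qed.

Lemma PH_scal a P : PHn P -> PHn (fn_scal a P).
Proof.
  intros [A [HA HPA]]. exists (ml_scal a A). split. apply Hps; auto.
  intro x. unfold fn_scal, ml_scal. rewrite HPA. auto.
Qed.

Lemma PHnorm_scal_le a P : PHn P -> PHNn (fn_scal a P) <= Kabs a * PHNn P.
Proof.
  intro HP. apply PHnorm_ge_scaled; auto using Kabs_ge0. intros A [HA HPA].
  destruct Hps as (_&_&_&_&_&Hhom&_). rewrite <- Hhom by auto.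
  apply PHnorm_le_rep. split. apply Hps; auto.
  intro x. unfold fn_scal, ml_scal. rewrite HPA; auto.
Qed.

Lemma PHnorm_scal a P : PHn P -> PHNn (fn_scal a P) = Kabs a * PHNn P.
Proof.
  intro HP. destruct (excluded_middle_informative (a = Kzero k)) as [->|Ha].
  - replace (fn_scal (Kzero k) P) with (@fn_zero k E F)
      by (apply functional_extensionality; intro; symmetry; apply (vscal_0 HF)).
    rewrite PHnorm_zero, Kabs_0. ring.
  - apply Rle_antisym. apply PHnorm_scal_le; auto.
    pose proof (PHnorm_scal_le (Kinv k a) (fn_scal a P) (PH_scal a P HP)) as Hle.
    replace (fn_scal (Kinv k a) (fn_scal a P)) with P in Hle.
    + apply Rmult_le_compat_l with (r := Kabs a) in Hle; [|apply Kabs_ge0].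
      rewrite <- Rmult_assoc, (Rmult_comm (Kabs a) (Kabs (Kinv k a))), Kabs_inv, Rmult_1_l in Hle;
        auto.
    + apply functional_extensionality. intro x. unfold fn_scal.
      rewrite (vscal_assoc HF), Kmul_comm, Kmul_inv_r, (vscal_1 HF); auto.
Qed.

Lemma PHnorm_ptriang P Q : PHn P -> PHn Q ->
  rpow (PHNn (fn_add P Q)) p <= rpow (PHNn P) p + rpow (PHNn Q) p.
Proof.
  intros HP HQ. apply Rle_forall_eps. intros d Hd.
  destruct (rpow_add_exists p Hp (PHNn P) (d / 2)) as [e1 [He1 Hr1]]; [apply PHnorm_ge0|lra|].
  destruct (rpow_add_exists p Hp (PHNn Q) (d / 2)) as [e2 [He2 Hr2]]; [apply PHnorm_ge0|lra|].
  destruct (PHnorm_approx P e1 HP He1) as [A [[HA HPA] HAn]].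
  destruct (PHnorm_approx Q e2 HQ He2) as [B [[HB HQB] HBn]].
  assert (rpow (PHNn (fn_add P Q)) p <= rpow (HNn (ml_add A B)) p).
  { apply rpow_le; auto. apply PHnorm_ge0. apply PHnorm_le_rep. split. apply Hps; auto.
    intro x. unfold fn_add, ml_add. rewrite HPA, HQB; auto. }
  assert (rpow (HNn A) p <= rpow (PHNn P + e1) p)
    by (apply rpow_le; [exact Hp|apply HN_ge0; auto|lra]).
  assert (rpow (HNn B) p <= rpow (PHNn Q + e2) p)
    by (apply rpow_le; [exact Hp|apply HN_ge0; auto|lra]).
  destruct Hps as (_&_&_&_&_&_&Htri). specialize (Htri A B HA HB). unfold HNn in *. lra.
Qed.

End PolynomialComponent.

(** * Hyper-ideal properties of P^H *)

Lemma psum_const m n : psum (fun _ => m) n = (m * n)%nat.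
Proof. induction n; simpl; lia. Qed.

Lemma opnorm_ge0 {k} {E F : Space k} (HF : Banach F) (t : E -> F) : 0 <= opnorm t.
Proof. apply Rsup_ge0. intros r [x [_ ->]]. apply (vnorm_ge0 HF). Qed.

Lemma mlnorm_ge0 {k n} {Es : Idx n -> Space k} {F : Space k} (HF : Banach F)
  (A : MLmap Es F) : 0 <= mlnorm A.
Proof. apply Rsup_ge0. intros r [x [_ ->]]. apply (vnorm_ge0 HF). Qed.

Lemma clin_id {k} {F : Space k} : clin (fun x : F => x).
Proof. split. intros x y a. reflexivity. intros x eps He. exists eps. split; auto. Qed.

Lemma ml_scalar_domain {k N} {F : Space k} (HF : Banach F)
  (A : MLmap (fun _ : Idx N => Kspace k) F) : is_multilinear A ->
  forall lam, A lam = vscal (iprod (Kone k) (@Kmul k) lam) (A (fun _ => Kone k)).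
Proof.
  intros HA lam. rewrite <- (ml_scal_all (Kspace_Banach k) HF A HA). f_equal.
  apply functional_extensionality_dep. intro i. simpl. rewrite Kmul_comm. symmetry. apply Kmul_1_l.
Qed.

Definition line_map {k} {E : Space k} (x0 : E) : MLmap (fun _ : Idx 1 => Kspace k) E :=
  fun lam => vscal (lam (exist _ 0%nat Nat.lt_0_1)) x0.

Lemma cml_line_map {k} {E : Space k} (HE : Banach E) (x0 : E) : cml (line_map x0).
Proof.
  set (i0 := exist (fun l => (l < 1)%nat) 0%nat Nat.lt_0_1).
  split.
  - intros i x y z a Hj Hi. unfold line_map. fold i0.
    replace i with i0 in Hi by (apply idx_eq; destruct i; simpl; lia).
    rewrite Hi. simpl. rewrite (vscal_adds HE), (vscal_assoc HE). auto.
  - intros x eps He. pose proof (vnorm_ge0 HE x0).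
    exists (eps / (vnorm x0 + 1)). split; [apply Rdiv_lt_0_compat; lra|].
    intros y Hy. specialize (Hy i0). unfold line_map. fold i0. simpl in Hy.
    rewrite (vscal_subs HE), (vnorm_scal HE).
    apply Rle_lt_trans with (eps / (vnorm x0 + 1) * vnorm x0); [apply Rmult_le_compat_r; lra|].
    apply Rlt_le_trans with (eps / (vnorm x0 + 1) * (vnorm x0 + 1)).
    + apply Rmult_lt_compat_l; [apply Rdiv_lt_0_compat|]; lra.
    + right; field; lra.
Qed.

Lemma HM_cast_arity {k} (HM : MLclass k) (HN : MLclassNorm k) {G H : Space k} N1 N2
  (e : N1 = N2) (C : MLmap (fun _ : Idx N1 => G) H) : HM N1 (fun _ => G) H C ->
  exists C' : MLmap (fun _ : Idx N2 => G) H, HM N2 (fun _ => G) H C' /\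
    HN N2 (fun _ => G) H C' = HN N1 (fun _ => G) H C /\
    forall x, C' (fun _ => x) = C (fun _ => x).
Proof. intros HC. subst N2. exists C; auto. Qed.

Section HyperIdeal.
Context {k : fkind} (p : R) (HM : MLclass k) (HN : MLclassNorm k).
Context (Hml : is_pnormed_ml_hyper_ideal k p HM HN).

Lemma ml_component n E F : (1 <= n)%nat -> Banach E -> Banach F ->
  (forall A, HM n (fun _ : Idx n => E) F A -> cml A) /\
  (forall A, finite_type_ml A -> HM n (fun _ : Idx n => E) F A) /\
  pnormed_subspace ml_zero ml_add ml_scal (HM n (fun _ => E) F) (HN n (fun _ => E) F) p.
Proof. intros Hn HE HF. apply (proj1 Hml); auto. Qed.

Lemma HM_compose_diag n m (E F G H : Space k) (A : MLmap (fun _ : Idx n => E) F)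
  (B : MLmap (fun _ : Idx m => G) E) (t : F -> H) :
  (1 <= n)%nat -> (1 <= m)%nat -> Banach E -> Banach F -> Banach G -> Banach H ->
  HM n (fun _ => E) F A -> cml B -> clin t ->
  exists C : MLmap (fun _ : Idx (m * n) => G) H,
    HM (m * n)%nat (fun _ => G) H C /\
    (forall x, C (fun _ => x) = t (A (fun _ => B (fun _ => x)))) /\
    HN (m * n)%nat (fun _ => G) H C <= opnorm t * mlnorm B ^ n * HN n (fun _ => E) F A.
Proof.
  intros Hn Hm HE HF HG HH HA HB Ht.
  destruct (proj2 (proj2 Hml) n (fun _ => m) (fun _ => E) F H
    (fun _ : Idx (psum (fun _ => m) n) => G) A (fun _ => B) t
    Hn (fun _ _ => Hm) (fun _ => HE) HF HH (fun _ => HG) HA (fun _ => HB) Ht) as [HC HCn].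
  destruct (HM_cast_arity HM HN _ _ (psum_const m n) _ HC) as [C [HC' [HNC Hdiag]]].
  exists C. split; [|split]; auto.
  rewrite HNC. eapply Rle_trans; [apply HCn|]. rewrite iprod_constR. right; ring.
Qed.

Lemma PHnorm_definite n E F P : (1 <= n)%nat -> Banach E -> Banach F ->
  PH HM n E F P -> PHnorm HM HN n E F P = 0 -> P = fn_zero.
Proof.
  intros Hn HE HF HP H0. apply functional_extensionality. intro x0. unfold fn_zero.
  pose proof (Kspace_Banach k) as HK.
  destruct (ml_component n E F Hn HE HF) as (Hcml & _ & Hps).
  destruct (ml_component (1 * n) (Kspace k) F ltac:(lia) HK HF) as (Hcml1 & _ & Hps1).
  pose proof (cml_line_map HE x0) as Hline.
  set (C0 := (fun lam => vscal (iprod (Kone k) (@Kmul k) lam) (P x0))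
               : MLmap (fun _ : Idx (1 * n) => Kspace k) F).
  assert (HC0 : forall A, rep HM P A -> HM (1 * n)%nat (fun _ => Kspace k) F C0 /\
     HN (1 * n)%nat (fun _ => Kspace k) F C0 <=
       (opnorm (fun y : F => y) * mlnorm (line_map x0) ^ n) * HN n (fun _ => E) F A).
  { intros A [HA HPA].
    destruct (HM_compose_diag n 1 E F (Kspace k) F A (line_map x0) (fun y => y)
      Hn (le_n 1) HE HF HK HF HA Hline clin_id) as [C [HC [Hdiag HCn]]].
    replace C0 with C; [auto|].
    apply functional_extensionality. intro lam. unfold C0.
    rewrite (ml_scalar_domain HF C (proj1 (Hcml1 C HC))), Hdiag, HPA. unfold line_map.
    rewrite (vscal_1 HE). auto. }
  destruct HP as [A0 HA0]. destruct (HC0 A0 HA0) as [HC0m _].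
  assert (HNC0 : HN (1 * n)%nat (fun _ => Kspace k) F C0 <= 0).
  { rewrite <- (Rmult_0_r (opnorm (fun y : F => y) * mlnorm (line_map x0) ^ n)), <- H0.
    apply (PHnorm_ge_scaled p HM HN Hps); [exists A0; auto| |].
    - apply Rmult_le_pos. apply opnorm_ge0; auto. apply pow_le, mlnorm_ge0; auto.
    - intros A HA. apply HC0; auto. }
  destruct Hps1 as (_&_&_&Hge&Hdef&_).
  assert (HC0z : C0 = ml_zero) by (apply Hdef; auto; specialize (Hge C0 HC0m); lra).
  assert (Hval : C0 (fun _ => Kone k) = vzero F) by (rewrite HC0z; reflexivity).
  unfold C0 in Hval. rewrite iprod_const, Kpow_1, (vscal_1 HF) in Hval. auto.
Qed.

End HyperIdeal.

Lemma In_finite_type k n : finite_type_ml (In k n).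
Proof.
  exists 1%nat, (fun _ _ x => x), (fun _ => Kone k). split.
  - intros l i. apply (@clin_id k (Kspace k)).
  - intro x. simpl. unfold In. rewrite Kadd_0_l, Kmul_comm, Kmul_1_l. auto.
Qed.

Section PolynomialHyperIdeal.
Context {k : fkind} (p : R) (Hp : 0 < p) (HM : MLclass k) (HN : MLclassNorm k).
Context (Hml : is_pnormed_ml_hyper_ideal k p HM HN).

Lemma PHnorm_pow n : (1 <= n)%nat ->
  PHnorm HM HN n (Kspace k) (Kspace k) (fun l : Kt k => Kpow l n) = 1.
Proof.
  intro Hn. pose proof (Kspace_Banach k) as HK.
  destruct (ml_component p HM HN Hml n (Kspace k) (Kspace k) Hn HK HK) as (Hcml & Hfin & Hps).
  assert (HIn : HM n (fun _ => Kspace k) (Kspace k) (In k n)) by (apply Hfin, In_finite_type).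
  assert (HrepIn : @rep k HM n (Kspace k) (Kspace k) (fun l : Kt k => Kpow l n) (In k n)).
  { split; auto. intro x. unfold In. symmetry. apply iprod_const. }
  assert (Hunique : forall A,
    @rep k HM n (Kspace k) (Kspace k) (fun l : Kt k => Kpow l n) A -> A = In k n).
  { intros A [HA HPA]. apply functional_extensionality_dep. intro lam.
    rewrite (ml_scalar_domain HK A (proj1 (Hcml A HA))), <- HPA, Kpow_1.
    simpl. rewrite Kmul_comm, Kmul_1_l. auto. }
  rewrite <- (proj1 (proj2 Hml) n Hn). apply Rle_antisym.
  - apply (PHnorm_le_rep p HM HN Hps); auto.
  - eapply Rle_trans; [apply (PHnorm_ge_scaled p HM HN Hps (fun l : Kt k => Kpow l n) _ 1)|lra].
    + exists (In k n); auto.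
    + lra.
    + intros A HA. rewrite (Hunique A HA). lra.
Qed.

Lemma PH_compose n m (E F G H : Space k) (P : E -> F) (Q : G -> E) (t : F -> H) :
  (1 <= n)%nat -> (1 <= m)%nat -> Banach E -> Banach F -> Banach G -> Banach H ->
  PH HM n E F P -> is_poly m Q -> clin t ->
  PH HM (m * n)%nat G H (fun x => t (P (Q x))) /\
  PHnorm HM HN (m * n)%nat G H (fun x => t (P (Q x))) <=
    (Cmm m) ^ n * opnorm t * PHnorm HM HN n E F P * (pnorm Q) ^ n.
Proof.
  intros Hn Hm HE HF HG HH HP HQ Ht.
  destruct (is_poly_polarization Q Hm HG HE HQ) as [S [HS [HSdiag HSn]]].
  destruct (ml_component p HM HN Hml n E F Hn HE HF) as (_ & _ & Hps).
  destruct (ml_component p HM HN Hml (m * n) G H ltac:(nia) HG HH) as (_ & _ & Hps2).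
  set (K := opnorm t * (Cmm m * pnorm Q) ^ n).
  assert (HK : 0 <= K).
  { apply Rmult_le_pos. apply opnorm_ge0; auto.
    apply pow_le. pose proof (mlnorm_ge0 HE S). lra. }
  assert (Hrep : forall A, rep HM P A -> PH HM (m * n)%nat G H (fun x => t (P (Q x))) /\
     PHnorm HM HN (m * n)%nat G H (fun x => t (P (Q x))) <= K * HN n (fun _ => E) F A).
  { intros A [HA HPA].
    destruct (HM_compose_diag p HM HN Hml n m E F G H A S t Hn Hm HE HF HG HH HA HS Ht)
      as [C [HC [Hdiag HCn]]].
    assert (HrepC : rep HM (fun x => t (P (Q x))) C).
    { split; auto. intro x. rewrite Hdiag, HPA, <- HSdiag. auto. }
    split; [exists C; exact HrepC|].
    eapply Rle_trans; [apply (PHnorm_le_rep p HM HN Hps2 _ _ HrepC)|].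
    eapply Rle_trans; [apply HCn|]. unfold K.
    pose proof (opnorm_ge0 HH t). pose proof (HN_ge0 p HM HN Hps A HA).
    assert (mlnorm S ^ n <= (Cmm m * pnorm Q) ^ n)
      by (apply pow_incr; split; auto using mlnorm_ge0).
    apply Rmult_le_compat_r; auto. apply Rmult_le_compat_l; auto. }
  destruct HP as [A0 HA0]. split; [apply (Hrep A0 HA0)|].
  eapply Rle_trans.
  - apply (PHnorm_ge_scaled p HM HN Hps P _ K); [exists A0; auto|auto|].
    intros A HA. apply (Hrep A HA).
  - unfold K. rewrite Rpow_mult_distr. right; ring.
Qed.

Lemma PH_pnormed_hyper_ideal : is_pnormed_poly_hyper_ideal k p Cmm (PH HM) (PHnorm HM HN).
Proof.
  split; [|split; [apply PHnorm_pow | intros; apply PH_compose; auto]].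
  intros n E F Hn HE HF.
  destruct (ml_component p HM HN Hml n E F Hn HE HF) as (Hcml & Hfin & Hps).
  split; [|split].
  - intros P [A [HA HPA]]. exists A. auto.
  - intros P [N [phi [y [Hphi HP]]]].
    exists (fun x => vsumn N (fun l =>
      vscal (iprod (Kone k) (@Kmul k) (fun i => phi l (x i))) (y l))).
    split.
    + apply Hfin. exists N, (fun l _ => phi l), y. auto.
    + intro x. rewrite HP. apply vsumn_ext. intros l _. rewrite iprod_const. auto.
  - repeat split.
    + apply (PH_zero p HM HN Hps).
    + intros; apply (PH_add p HM HN Hps); auto.
    + intros; apply (PH_scal p HM HN Hps); auto.
    + intros; apply (PHnorm_ge0 p HM HN Hps).
    + apply (PHnorm_definite p HM HN Hml); auto.
    + intros ->. apply (PHnorm_zero p HM HN Hps).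
    + intros a P HP. apply (PHnorm_scal p HM HN HF Hps); auto.
    + intros P Q HP HQ. apply (PHnorm_ptriang p HM HN Hp Hps); auto.
Qed.

End PolynomialHyperIdeal.

(** * Completeness *)

Lemma half_pow_small y : 0 < y -> exists N, forall j, (N <= j)%nat -> (1 / 2) ^ j < y.
Proof.
  intro Hy. destruct (pow_lt_1_zero (1 / 2)) with (y := y) as [N HN]; auto.
  rewrite Rabs_right; lra. exists N. intros j Hj. specialize (HN j Hj).
  rewrite Rabs_right in HN; auto. apply Rle_ge, pow_le; lra.
Qed.

Fixpoint dominating_seq (psi : nat -> nat) (j : nat) : nat :=
  match j with O => psi O | S j' => Nat.max (S (dominating_seq psi j')) (psi (S j')) end.

Lemma Cauchy_fast_subsequence (d : nat -> nat -> R) (rad : nat -> R) :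
  (forall j, 0 < rad j) ->
  (forall eps, 0 < eps -> exists M, forall i i', (M <= i)%nat -> (M <= i')%nat -> d i i' < eps) ->
  exists phi : nat -> nat, (forall j, (phi j < phi (S j))%nat) /\ (forall j, (j <= phi j)%nat) /\
    forall j i i', (phi j <= i)%nat -> (phi j <= i')%nat -> d i i' < rad j.
Proof.
  intros Hrad Hc. destruct (choice (fun j M => forall i i', (M <= i)%nat -> (M <= i')%nat ->
    d i i' < rad j) (fun j => Hc (rad j) (Hrad j))) as [psi Hpsi].
  assert (Hinc : forall j, (dominating_seq psi j < dominating_seq psi (S j))%nat)
    by (intro j; cbn [dominating_seq];
        pose proof (Nat.le_max_l (S (dominating_seq psi j)) (psi (S j))); lia).
  assert (Hdom : forall j, (psi j <= dominating_seq psi j)%nat)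
    by (intros [|j]; cbn [dominating_seq]; [lia|apply Nat.le_max_r]).
  exists (dominating_seq psi). split; [|split]; auto.
  - induction j; [lia|]. specialize (Hinc j). lia.
  - intros j i i' Hi Hi'. apply Hpsi; specialize (Hdom j); lia.
Qed.

Fixpoint partial_sums {X : Type} (add : X -> X -> X) (A0 : X) (D : nat -> X) (j : nat) : X :=
  match j with O => A0 | S j' => add (partial_sums add A0 D j') (D j') end.

Section Completeness.
Context {k : fkind} (p : R) (Hp : 0 < p) (HM : MLclass k) (HN : MLclassNorm k).
Context {n : nat} {E F : Space k} (HF : Banach F).
Context (Hps : pnormed_subspace ml_zero ml_add ml_scal
                 (HM n (fun _ : Idx n => E) F) (HN n (fun _ : Idx n => E) F) p).
Context (Hcomp : complete_subspace ml_add ml_scal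
                   (HM n (fun _ : Idx n => E) F) (HN n (fun _ : Idx n => E) F)).

Let m1 := Kopp (Kone k).
Let psub (P Q : E -> F) := fn_add P (fn_scal m1 Q).
Let msub (A B : MLmap (fun _ : Idx n => E) F) := ml_add A (ml_scal m1 B).
Let HMn := HM n (fun _ : Idx n => E) F.
Let HNn := HN n (fun _ : Idx n => E) F.
Let PHNn := PHnorm HM HN n E F.

Lemma vadd_scal_m1 (a : F) : vadd a (vscal m1 a) = vzero F.
Proof. unfold m1. rewrite <- (vopp_scal HF). apply (vadd_opp HF). Qed.

Lemma HM_msub A B : HMn A -> HMn B -> HMn (msub A B).
Proof. intros. apply Hps; auto. apply Hps; auto. Qed.

Lemma PH_psub P Q : PH HM n E F P -> PH HM n E F Q -> PH HM n E F (psub P Q).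
Proof. intros. apply (PH_add p HM HN Hps); auto. apply (PH_scal p HM HN Hps); auto. Qed.

Lemma rep_psub P Q A B : rep HM P A -> rep HM Q B -> rep HM (psub P Q) (msub A B).
Proof.
  intros [HA HPA] [HB HQB]. split. apply HM_msub; auto.
  intro x. unfold psub, msub, fn_add, fn_scal, ml_add, ml_scal. rewrite HPA, HQB. auto.
Qed.

Lemma HN_msub_sym A B : HMn A -> HMn B -> HNn (msub A B) = HNn (msub B A).
Proof.
  intros HA HB. replace (msub A B) with (ml_scal m1 (msub B A)).
  - destruct Hps as (_&_&_&_&_&Hhom&_). rewrite Hhom by (apply HM_msub; auto).
    unfold m1. rewrite Kabs_opp, Kabs_1. apply Rmult_1_l.
  - apply functional_extensionality; intro x. unfold msub, ml_add, ml_scal, m1.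
    rewrite (vscal_addv HF), (vscal_assoc HF), Kmul_opp_1, Kopp_opp, (vscal_1 HF), (vadd_comm HF).
    auto.
Qed.

Lemma psub_split P Q R : psub P R = fn_add (psub P Q) (psub Q R).
Proof.
  apply functional_extensionality; intro x. unfold psub, fn_add, fn_scal.
  rewrite <- !(vadd_assoc HF). f_equal.
  rewrite (vadd_assoc HF), (vadd_comm HF (vscal m1 _)), vadd_scal_m1, (vadd_0_l HF). auto.
Qed.

(* With increments of p-th power norm at most 2^-j, the p-triangle inequality makes
   the partial sums Cauchy. *)
Lemma partial_sums_Cauchy A0 (D : nat -> MLmap (fun _ : Idx n => E) F) :
  HMn A0 -> (forall j, HMn (D j) /\ rpow (HNn (D j)) p <= (1 / 2) ^ j) ->
  let As := partial_sums ml_add A0 D in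
  (forall j, HMn (As j)) /\
  forall eps, 0 < eps -> exists M, forall i j, (M <= i)%nat -> (M <= j)%nat ->
    HNn (msub (As i) (As j)) < eps.
Proof.
  intros HA0 HD As.
  assert (HS : forall j, HMn (As j)) by (induction j; simpl; auto; apply Hps; auto; apply HD).
  assert (Hest : forall j i, (j <= i)%nat ->
    rpow (HNn (msub (As i) (As j))) p <= 2 * (1 / 2) ^ j - 2 * (1 / 2) ^ i).
  { intros j i Hji. induction Hji as [|i Hji IH].
    - replace (msub (As j) (As j)) with (@ml_zero k n (fun _ => E) F).
      + destruct Hps as (H0&_&_&_&Hdef&_). unfold HNn.
        rewrite (proj2 (Hdef _ H0) eq_refl), rpow_0; auto. lra.
      + apply functional_extensionality; intro x. unfold msub, ml_add, ml_scal, ml_zero.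
        rewrite vadd_scal_m1. auto.
    - replace (msub (As (S i)) (As j)) with (ml_add (msub (As i) (As j)) (D i)).
      + destruct Hps as (_&_&_&_&_&_&Htri). destruct (HD i) as [HDi HDn].
        eapply Rle_trans; [apply Htri; auto; apply HM_msub; auto|].
        rewrite <- tech_pow_Rmult. unfold HNn in *. lra.
      + apply functional_extensionality; intro x. change (As (S i)) with (ml_add (As i) (D i)).
        unfold msub, ml_add, ml_scal. rewrite <- !(vadd_assoc HF). f_equal. apply (vadd_comm HF). }
  split; auto. intros eps He.
  destruct (half_pow_small (rpow eps p / 2)) as [M HM0];
    [apply Rdiv_lt_0_compat; [apply rpow_pos; auto|lra]|].
  assert (Hord : forall a b, (M <= b)%nat -> (b <= a)%nat -> HNn (msub (As a) (As b)) < eps).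
  { intros a b Hb Hba. apply (rpow_lt_inv p Hp); [apply (HN_ge0 p HM HN Hps), HM_msub; auto|lra|].
    eapply Rle_lt_trans; [apply Hest; auto|]. specialize (HM0 b Hb).
    pose proof (pow_le (1 / 2) a ltac:(lra)). lra. }
  exists M. intros i j Hi Hj. destruct (Nat.le_ge_cases j i).
  - apply Hord; auto.
  - rewrite HN_msub_sym by auto. apply Hord; auto.
Qed.

Lemma PH_converges_of_subsequence (u : nat -> E -> F) (phi : nat -> nat)
  (As : nat -> MLmap (fun _ : Idx n => E) F) Ainf :
  (forall i, PH HM n E F (u i)) ->
  (forall eps, 0 < eps -> exists M, forall i i', (M <= i)%nat -> (M <= i')%nat ->
     PHNn (psub (u i) (u i')) < eps) ->
  (forall j, (j <= phi j)%nat) -> (forall j, rep HM (u (phi j)) (As j)) -> HMn Ainf ->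
  (forall eps, 0 < eps -> exists M, forall j, (M <= j)%nat -> HNn (msub (As j) Ainf) < eps) ->
  forall eps, 0 < eps -> exists M, forall i, (M <= i)%nat ->
    PHNn (psub (u i) (fun x => Ainf (fun _ => x))) < eps.
Proof.
  intros Hu Hc Hphi HAs HAinf Hconv eps He.
  set (Pinf := fun x => Ainf (fun _ : Idx n => x)).
  assert (HrepInf : rep HM Pinf Ainf) by (split; auto).
  destruct (rpow_surj p Hp (rpow eps p / 2)) as [dl [Hdl Hdlr]];
    [apply Rdiv_lt_0_compat; [apply rpow_pos; auto|lra]|].
  destruct (Hc dl Hdl) as [Mc HMc]. destruct (Hconv dl Hdl) as [Ma HMa].
  set (j := (Mc + Ma)%nat). exists Mc. intros i Hi.
  assert (HP1 : PH HM n E F (psub (u i) (u (phi j)))) by (apply PH_psub; auto).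
  assert (HP2 : PH HM n E F (psub (u (phi j)) Pinf)) by (apply PH_psub; auto; exists Ainf; auto).
  assert (H1 : PHNn (psub (u i) (u (phi j))) < dl).
  { apply HMc; auto. pose proof (Hphi j). unfold j in *. lia. }
  assert (H2 : PHNn (psub (u (phi j)) Pinf) < dl).
  { apply Rle_lt_trans with (HNn (msub (As j) Ainf)).
    - apply (PHnorm_le_rep p HM HN Hps), rep_psub; auto.
    - apply HMa. unfold j; lia. }
  apply (rpow_lt_inv p Hp); [apply (PHnorm_ge0 p HM HN Hps)|lra|].
  rewrite (psub_split _ (u (phi j))).
  eapply Rle_lt_trans; [apply (PHnorm_ptriang p HM HN Hp Hps); auto|].
  assert (rpow (PHNn (psub (u i) (u (phi j)))) p < rpow dl p)
    by (apply rpow_lt; auto; apply (PHnorm_ge0 p HM HN Hps)).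
  assert (rpow (PHNn (psub (u (phi j)) Pinf)) p < rpow dl p)
    by (apply rpow_lt; auto; apply (PHnorm_ge0 p HM HN Hps)).
  unfold PHNn in *. lra.
Qed.

Lemma PH_complete : complete_subspace fn_add fn_scal (PH HM n E F) PHNn.
Proof.
  intros u Hu Hc. change (fn_add ?P (fn_scal (Kopp (Kone k)) ?Q)) with (psub P Q) in Hc |- *.
  destruct (choice (fun j r => 0 < r /\ rpow r p = (1 / 2) ^ j)
    (fun j => rpow_surj p Hp _ (pow_lt (1 / 2) j ltac:(lra)))) as [rad Hrad].
  destruct (Cauchy_fast_subsequence (fun i i' => PHNn (psub (u i) (u i'))) rad
    (fun j => proj1 (Hrad j)) Hc) as [phi [Hinc [Hphi Hsub]]].
  assert (HD : forall j, exists D, rep HM (psub (u (phi (S j))) (u (phi j))) D /\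
                                   rpow (HNn D) p <= (1 / 2) ^ j).
  { intro j. destruct (PHnorm_approx p HM HN Hps (psub (u (phi (S j))) (u (phi j)))
      (rad j - PHNn (psub (u (phi (S j))) (u (phi j))))) as [D [HDrep HDn]].
    - apply PH_psub; auto.
    - assert (PHNn (psub (u (phi (S j))) (u (phi j))) < rad j)
        by (apply Hsub; specialize (Hinc j); lia).
      lra.
    - exists D. split; auto. rewrite <- (proj2 (Hrad j)).
      apply rpow_le; auto. apply (HN_ge0 p HM HN Hps), HDrep. unfold HNn, PHNn in *. lra. }
  destruct (choice _ HD) as [D HDs].
  destruct (Hu (phi 0%nat)) as [A0 HA0].
  set (As := partial_sums ml_add A0 D).
  assert (HAs : forall j, rep HM (u (phi j)) (As j)).
  { induction j as [|j [HAj HPj]]; [apply HA0|].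
    destruct (HDs j) as [[HDj HPDj] _]. split.
    - apply Hps; auto.
    - intro x. change (As (S j)) with (ml_add (As j) (D j)). unfold ml_add.
      rewrite <- HPj, <- HPDj. unfold psub, fn_add, fn_scal.
      rewrite (vadd_assoc HF), (vadd_comm HF (u (phi j) x)), <- (vadd_assoc HF), vadd_scal_m1,
        (vadd_0 HF). auto. }
  destruct (partial_sums_Cauchy A0 D (proj1 HA0)
    (fun j => conj (proj1 (proj1 (HDs j))) (proj2 (HDs j))))
    as [HAsm HAsc].
  destruct (Hcomp As HAsm HAsc) as [Ainf [HAinf Hconv]].
  exists (fun x => Ainf (fun _ => x)). split; [exists Ainf; split; auto|].
  apply (PH_converges_of_subsequence u phi As Ainf); auto.
Qed.

End Completeness.

Theorem mainTheorem2 (k : fkind) (p : R) (HM : MLclass k) (HN : MLclassNorm k) :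
  0 < p <= 1 ->
  (is_pnormed_ml_hyper_ideal k p HM HN ->
     is_pnormed_poly_hyper_ideal k p Cmm (PH HM) (PHnorm HM HN)) /\
  (is_pBanach_ml_hyper_ideal k p HM HN ->
     is_pBanach_poly_hyper_ideal k p Cmm (PH HM) (PHnorm HM HN)).
Proof.
  intros [Hp _]. split.
  - apply (PH_pnormed_hyper_ideal p Hp HM HN).
  - intros [Hml Hcomplete]. split; [apply (PH_pnormed_hyper_ideal p Hp HM HN Hml)|].
    intros n E F Hn HE HF.
    destruct (ml_component p HM HN Hml n E F Hn HE HF) as (_ & _ & Hps).
    apply (PH_complete p Hp HM HN HF Hps (Hcomplete n (fun _ => E) F Hn (fun _ => HE) HF)).
Qed.
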